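(* Let $\mathcal M=(\mathcal L+\mathrm{diag}(p_1,\dots,p_n))\otimes I_m$ and suppose Assumptions A1 and A2 hold. Consider the estimator $\dot a_i=-\beta\,\mathrm{sgn}\big(\sum_{j\in\mathcal N_i}w_{ij}(a_i-a_j)+p_i(a_i-a_0)\big)$, $i=1,\dots,n$, with arbitrary initial values $a_i(t_0)\in\mathbb R^m$. Let $\bar a=\mathrm{col}(a_1-a_0,\dots,a_n-a_0)$ and $V_0=\frac12\bar a^T\mathcal M\bar a$. Then $a_i(t)=a_0(t)$ for all $i$ and all $t\ge T_f$, where $$T_f=t_0+\frac{\sqrt{2\lambda_{\max}(\mathcal M)V_0(t_0)}}{\lambda_{\min}(\mathcal M)\big(\beta-\sup_{t\ge t_0}\|\dot a_0(t)\|\big)}.$$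
   Context: Undirected graph on $\{1,\dots,n\}$ with symmetric weights $w_{ij}\ge0$, $w_{ii}=0$, neighbour sets $\mathcal N_i$; pinning weights $p_i\ge0$; Laplacian $\mathcal L$ with $l_{ii}=\sum_jw_{ij}$, $l_{ij}=-w_{ij}$. $a_0:[t_0,\infty)\to\mathbb R^m$ is continuously differentiable (leader acceleration). $\mathrm{sgn}(z)$ is the componentwise sign. Assumption A1: the leader has a directed path to every node (then $\mathcal M$ is symmetric positive definite). Assumption A2: $\sup_{t\ge t_0}\|\dot a_0(t)\|<\beta$, $\beta>0$. $\lambda_{\min},\lambda_{\max}$ denote extreme eigenvalues. *)

From Stdlib Require Import Reals Lra.
Open Scope R_scope.

Fixpoint rsum (n : nat) (f : nat -> R) : R :=
  match n with
  | O => 0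
  | S n' => rsum n' f + f n'
  end.

(* Vectors in R^m are functions nat -> R (only indices k < m matter).
   Euclidean norm. *)
Definition norm2 (m : nat) (v : nat -> R) : R :=
  sqrt (rsum m (fun k => v k * v k)).

(* Weighted graph on nodes 0..n-1 (paper's 1..n), weights w, pinning p. *)
Definition graph_ok (n : nat) (w : nat -> nat -> R) (p : nat -> R) : Prop :=
  (forall i j, (i < n)%nat -> (j < n)%nat -> w i j = w j i) /\
  (forall i j, (i < n)%nat -> (j < n)%nat -> 0 <= w i j) /\
  (forall i, (i < n)%nat -> w i i = 0) /\
  (forall i, (i < n)%nat -> 0 <= p i).

(* Nodes reachable from the leader by a directed path:
   the leader is linked to i iff p i > 0; i is linked to j iff w i j > 0. *)
Inductive leader_reach (n : nat) (w : nat -> nat -> R) (p : nat -> R) : nat -> Prop :=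
  | lr_pin : forall i, (i < n)%nat -> 0 < p i -> leader_reach n w p i
  | lr_step : forall i j, leader_reach n w p i -> (j < n)%nat -> 0 < w i j ->
      leader_reach n w p j.

Definition assumption_A1 (n : nat) (w : nat -> nat -> R) (p : nat -> R) : Prop :=
  forall i, (i < n)%nat -> leader_reach n w p i.

Definition laplacian (n : nat) (w : nat -> nat -> R) (i j : nat) : R :=
  if Nat.eqb i j then rsum n (fun l => w i l) else - w i j.

Definition Hmat (n : nat) (w : nat -> nat -> R) (p : nat -> R) (i j : nat) : R :=
  laplacian n w i j + (if Nat.eqb i j then p i else 0).

(* M = H (x) I_m, indexed by pairs: M_{(i,k),(j,l)} = H_ij * delta_kl. *)
Definition Mmat (n m : nat) (w : nat -> nat -> R) (p : nat -> R)
  (i k j l : nat) : R :=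
  Hmat n w p i j * (if Nat.eqb k l then 1 else 0).

Definition Mvec (n m : nat) (w : nat -> nat -> R) (p : nat -> R)
  (v : nat -> nat -> R) (i k : nat) : R :=
  rsum n (fun j => rsum m (fun l => Mmat n m w p i k j l * v j l)).

Definition Mquad (n m : nat) (w : nat -> nat -> R) (p : nat -> R)
  (v : nat -> nat -> R) : R :=
  rsum n (fun i => rsum m (fun k => v i k * Mvec n m w p v i k)).

Definition is_eigenvalue (n m : nat) (w : nat -> nat -> R) (p : nat -> R)
  (lam : R) : Prop :=
  exists v : nat -> nat -> R,
    (exists i k, (i < n)%nat /\ (k < m)%nat /\ v i k <> 0) /\
    (forall i k, (i < n)%nat -> (k < m)%nat -> Mvec n m w p v i k = lam * v i k).

Definition is_lambda_max n m w p (lam : R) : Prop :=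
  is_eigenvalue n m w p lam /\ forall mu, is_eigenvalue n m w p mu -> mu <= lam.

Definition is_lambda_min n m w p (lam : R) : Prop :=
  is_eigenvalue n m w p lam /\ forall mu, is_eigenvalue n m w p mu -> lam <= mu.

Definition deriv_within_from (t0 : R) (f : R -> R) (t d : R) : Prop :=
  forall eps, 0 < eps -> exists delta, 0 < delta /\
    forall h, h <> 0 -> Rabs h < delta -> t0 <= t + h ->
      Rabs ((f (t + h) - f t) / h - d) < eps.

Definition C1_from (t0 : R) (m : nat) (a0 da0 : nat -> R -> R) : Prop :=
  forall k, (k < m)%nat ->
    (forall t, t0 <= t -> deriv_within_from t0 (a0 k) t (da0 k t)) /\
    (forall t, t0 <= t -> forall eps, 0 < eps -> exists delta, 0 < delta /\
       forall s, t0 <= s -> Rabs (s - t) < delta -> Rabs (da0 k s - da0 k t) < eps).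

(* Lebesgue-null subset of R: coverable by countably many open intervals of
   arbitrarily small total length. *)
Definition null_set (E : R -> Prop) : Prop :=
  forall eps, 0 < eps -> exists c d : nat -> R,
    (forall j, c j <= d j) /\
    (forall t, E t -> exists j, c j < t /\ t < d j) /\
    (forall N, rsum N (fun j => d j - c j) < eps).

Definition abs_continuous_on (a b : R) (f : R -> R) : Prop :=
  forall eps, 0 < eps -> exists delta, 0 < delta /\
    forall (N : nat) (c d : nat -> R),
      (forall j, (j < N)%nat -> a <= c j /\ c j <= d j /\ d j <= b) ->
      (forall j j', (j < j')%nat -> (j' < N)%nat -> d j <= c j') ->
      rsum N (fun j => d j - c j) < delta ->
      rsum N (fun j => Rabs (f (d j) - f (c j))) < eps.

Definition in_SGN (z u : R) : Prop :=
  (0 < z -> u = 1) /\ (z < 0 -> u = -1) /\ (-1 <= u /\ u <= 1).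

(* s_i = sum_{j in N_i} w_ij (a_i - a_j) + p_i (a_i - a_0), component k, time t.
   (Terms with j not a neighbour have w_ij = 0 and vanish.) *)
Definition sliding_var (n : nat) (w : nat -> nat -> R) (p : nat -> R)
  (a : nat -> nat -> R -> R) (a0 : nat -> R -> R) (i k : nat) (t : R) : R :=
  rsum n (fun j => w i j * (a i k t - a j k t)) + p i * (a i k t - a0 k t).

(* a = (a_1..a_n), a_i : [t0,+oo) -> R^m, is a Filippov solution of
   da_i/dt = - beta sgn(s_i): absolutely continuous on every [t0,T], and for
   almost every t > t0 it is differentiable with
   da_i/dt in -beta SGN(s_i) (componentwise). *)
Definition filippov_solution (n m : nat) (w : nat -> nat -> R) (p : nat -> R)
  (beta t0 : R) (a0 : nat -> R -> R) (a : nat -> nat -> R -> R) : Prop :=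
  (forall i k T, (i < n)%nat -> (k < m)%nat -> t0 <= T ->
     abs_continuous_on t0 T (a i k)) /\
  exists Nul : R -> Prop, null_set Nul /\
    forall t, t0 < t -> ~ Nul t ->
      forall i k, (i < n)%nat -> (k < m)%nat ->
        exists dd u, derivable_pt_lim (a i k) t dd /\
          in_SGN (sliding_var n w p a a0 i k t) u /\ dd = - beta * u.

From Stdlib Require Import Reals Lra Lia Psatz List Classical ClassicalEpsilon.
Open Scope R_scope.

(** With [abar = a - 1 (x) a0] and [s = M abar] (the vector of sliding
    variables), the Lyapunov function [V = abar^T M abar / 2] is absolutely
    continuous, and at almost every time
    [V' = s . abar' = -beta |s|_1 - sum_i s_i . a0' <= -(beta - S) |s|_2],
    where [S = sup |a0'|].  Since [|s|_2 = |M abar| >= lmin |abar|] and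
    [2 V <= lmax |abar|^2], this gives [(sqrt V)' <= -(beta - S) lmin / sqrt (2 lmax)]
    while [V > 0], so [V] vanishes by time [T_f]; positive definiteness of [M]
    (Assumption A1) then forces [abar = 0].  The "almost every time" step is
    done without measure theory: an absolutely continuous function which is
    locally nonincreasing off a null set is nonincreasing. *)

(** * Finite sums and vectors of [R^(nm)] *)

Lemma rsum_ext n f g : (forall i, (i < n)%nat -> f i = g i) -> rsum n f = rsum n g.
Proof.
  induction n as [|n IH]; intros H; simpl; [reflexivity|].
  rewrite IH by (intros; apply H; lia). rewrite (H n) by lia. reflexivity.
Qed.

Lemma rsum_plus n f g : rsum n (fun i => f i + g i) = rsum n f + rsum n g.
Proof. induction n; simpl; [lra|]. rewrite IHn; lra. Qed.

Lemma rsum_minus n f g : rsum n (fun i => f i - g i) = rsum n f - rsum n g.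
Proof. induction n; simpl; [lra|]. rewrite IHn; lra. Qed.

Lemma rsum_scal n c f : rsum n (fun i => c * f i) = c * rsum n f.
Proof. induction n; simpl; [lra|]. rewrite IHn; lra. Qed.

Lemma rsum_opp n f : rsum n (fun i => - f i) = - rsum n f.
Proof. induction n; simpl; [lra|]. rewrite IHn; lra. Qed.

Lemma rsum_const n c : rsum n (fun _ => c) = INR n * c.
Proof. induction n; simpl rsum; [simpl; ring|]. rewrite IHn, S_INR. ring. Qed.

Lemma rsum_le n f g : (forall i, (i < n)%nat -> f i <= g i) -> rsum n f <= rsum n g.
Proof.
  induction n as [|n IH]; intros H; simpl; [lra|].
  assert (rsum n f <= rsum n g) by (apply IH; intros; apply H; lia).
  specialize (H n ltac:(lia)); lra.
Qed.

Lemma rsum_nonneg n f : (forall i, (i < n)%nat -> 0 <= f i) -> 0 <= rsum n f.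
Proof.
  intros H. replace 0 with (rsum n (fun _ => 0)) by (rewrite rsum_const; ring).
  now apply rsum_le.
Qed.

Lemma rsum_term_le n f i :
  (forall j, (j < n)%nat -> 0 <= f j) -> (i < n)%nat -> f i <= rsum n f.
Proof.
  induction n as [|n IH]; simpl; intros H Hi; [lia|].
  destruct (Nat.eq_dec i n) as [->|Hne].
  - assert (0 <= rsum n f) by (apply rsum_nonneg; intros; apply H; lia). lra.
  - assert (f i <= rsum n f) by (apply IH; [intros; apply H|]; lia).
    specialize (H n ltac:(lia)); lra.
Qed.

Lemma rsum_eq0_nonneg n f : (forall j, (j < n)%nat -> 0 <= f j) -> rsum n f = 0 ->
  forall i, (i < n)%nat -> f i = 0.
Proof.
  intros H Hs i Hi. pose proof (rsum_term_le n f i H Hi). specialize (H i Hi). lra.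
Qed.

Lemma rsum_swap n m (f : nat -> nat -> R) :
  rsum n (fun i => rsum m (fun j => f i j)) = rsum m (fun j => rsum n (fun i => f i j)).
Proof.
  induction n as [|n IH]; simpl.
  - rewrite rsum_const; ring.
  - rewrite IH, <- rsum_plus. reflexivity.
Qed.

Lemma rsum_delta n i f : (i < n)%nat ->
  rsum n (fun j => (if Nat.eqb i j then 1 else 0) * f j) = f i.
Proof.
  induction n as [|n IH]; simpl; intros Hi; [lia|].
  destruct (Nat.eq_dec i n) as [->|Hne].
  - rewrite Nat.eqb_refl, (rsum_ext n _ (fun _ => 0)), rsum_const; [ring|].
    intros j Hj. destruct (Nat.eqb_spec n j); [lia|ring].
  - rewrite IH by lia. destruct (Nat.eqb_spec i n); [lia|ring].
Qed.

Lemma rsum_abs n f : Rabs (rsum n f) <= rsum n (fun i => Rabs (f i)).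
Proof.
  induction n; simpl; [rewrite Rabs_R0; lra|].
  eapply Rle_trans; [apply Rabs_triang|]. lra.
Qed.

Lemma rsum_shift n f : rsum (S n) f = f 0%nat + rsum n (fun j => f (S j)).
Proof.
  induction n as [|n IH]; [simpl; lra|].
  change (rsum (S (S n)) f) with (rsum (S n) f + f (S n)). rewrite IH. simpl; lra.
Qed.

Definition dsum n m (f : nat -> nat -> R) := rsum n (fun i => rsum m (fun k => f i k)).
Definition dot n m (u v : nat -> nat -> R) := dsum n m (fun i k => u i k * v i k).
Definition sqnorm n m v := dot n m v v.

Lemma dsum_ext n m f g :
  (forall i k, (i < n)%nat -> (k < m)%nat -> f i k = g i k) -> dsum n m f = dsum n m g.
Proof. intros H; apply rsum_ext; intros; apply rsum_ext; auto. Qed.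

Lemma dsum_plus n m f g : dsum n m (fun i k => f i k + g i k) = dsum n m f + dsum n m g.
Proof.
  unfold dsum. rewrite <- rsum_plus. apply rsum_ext; intros. apply rsum_plus.
Qed.

Lemma dsum_minus n m f g : dsum n m (fun i k => f i k - g i k) = dsum n m f - dsum n m g.
Proof.
  unfold dsum. rewrite <- rsum_minus. apply rsum_ext; intros. apply rsum_minus.
Qed.

Lemma dsum_opp n m f : dsum n m (fun i k => - f i k) = - dsum n m f.
Proof.
  unfold dsum. rewrite <- rsum_opp. apply rsum_ext; intros. apply rsum_opp.
Qed.

Lemma dsum_scal n m c f : dsum n m (fun i k => c * f i k) = c * dsum n m f.
Proof.
  unfold dsum. rewrite <- rsum_scal. apply rsum_ext; intros. apply rsum_scal.
Qed.

Lemma dsum_le n m f g :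
  (forall i k, (i < n)%nat -> (k < m)%nat -> f i k <= g i k) -> dsum n m f <= dsum n m g.
Proof. intros H; apply rsum_le; intros; apply rsum_le; auto. Qed.

Lemma dsum_nonneg n m f :
  (forall i k, (i < n)%nat -> (k < m)%nat -> 0 <= f i k) -> 0 <= dsum n m f.
Proof. intros H; apply rsum_nonneg; intros; apply rsum_nonneg; auto. Qed.

Lemma dsum_abs n m f : Rabs (dsum n m f) <= dsum n m (fun i k => Rabs (f i k)).
Proof.
  eapply Rle_trans; [apply rsum_abs|]. apply rsum_le; intros. apply rsum_abs.
Qed.

Lemma dsum_eq0_nonneg n m f :
  (forall i k, (i < n)%nat -> (k < m)%nat -> 0 <= f i k) -> dsum n m f = 0 ->
  forall i k, (i < n)%nat -> (k < m)%nat -> f i k = 0.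
Proof.
  intros H Hs i k Hi Hk.
  assert (Hrow : rsum m (f i) = 0).
  { apply (rsum_eq0_nonneg n (fun i => rsum m (f i))); auto.
    intros; apply rsum_nonneg; auto. }
  now apply (rsum_eq0_nonneg m (f i)); auto.
Qed.

Lemma dsum_term_le n m f i k :
  (forall j l, (j < n)%nat -> (l < m)%nat -> 0 <= f j l) ->
  (i < n)%nat -> (k < m)%nat -> f i k <= dsum n m f.
Proof.
  intros H Hi Hk. eapply Rle_trans.
  - apply (rsum_term_le m (f i) k); auto.
  - apply (rsum_term_le n (fun i => rsum m (f i)) i); auto.
    intros; apply rsum_nonneg; auto.
Qed.

Lemma dot_abs_le n m u v B : (forall i k, (i < n)%nat -> (k < m)%nat -> Rabs (v i k) <= B) ->
  Rabs (dot n m u v) <= B * dsum n m (fun i k => Rabs (u i k)).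
Proof.
  intros H. eapply Rle_trans; [apply dsum_abs|]. rewrite <- dsum_scal. apply dsum_le; intros i k Hi Hk.
  rewrite Rabs_mult. specialize (H i k Hi Hk). pose proof (Rabs_pos (u i k)). nra.
Qed.

Lemma sqnorm_nonneg n m v : 0 <= sqnorm n m v.
Proof. apply dsum_nonneg; intros; nra. Qed.

Lemma sqnorm_eq0 n m v : sqnorm n m v = 0 -> forall i k, (i < n)%nat -> (k < m)%nat -> v i k = 0.
Proof.
  intros H i k Hi Hk.
  assert (v i k * v i k = 0) by (apply (dsum_eq0_nonneg n m _ (fun _ _ _ _ => Rle_0_sqr _) H); auto).
  nra.
Qed.

Lemma sqr_le_sqnorm n m v i k : (i < n)%nat -> (k < m)%nat -> v i k * v i k <= sqnorm n m v.
Proof. apply (dsum_term_le n m (fun i k => v i k * v i k)); intros; nra. Qed.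

Lemma sqnorm_unit_abs_le n m u : sqnorm n m u = 1 ->
  forall i k, (i < n)%nat -> (k < m)%nat -> Rabs (u i k) <= 1.
Proof.
  intros Hu i k Hi Hk. pose proof (sqr_le_sqnorm n m u i k Hi Hk). rewrite <- Rabs_R1.
  apply Rsqr_le_abs_0. unfold Rsqr. lra.
Qed.

Lemma sqnorm_unit_exists n m : (0 < n)%nat -> (0 < m)%nat -> exists e, sqnorm n m e = 1.
Proof.
  intros Hn Hm. exists (fun i k => (if Nat.eqb 0 i then 1 else 0) * ((if Nat.eqb 0 k then 1 else 0) * 1)).
  unfold sqnorm, dot, dsum.
  rewrite (rsum_ext n _ (fun i => (if Nat.eqb 0 i then 1 else 0) *
                                   rsum m (fun k => (if Nat.eqb 0 k then 1 else 0) * 1))).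
  - rewrite !rsum_delta by auto. reflexivity.
  - intros i Hi. rewrite <- rsum_scal. apply rsum_ext; intros k Hk.
    destruct (Nat.eqb 0 i), (Nat.eqb 0 k); ring.
Qed.

Lemma sqnorm_scal n m c v : sqnorm n m (fun i k => c * v i k) = c ^ 2 * sqnorm n m v.
Proof. unfold sqnorm, dot. rewrite <- dsum_scal. apply dsum_ext; intros; ring. Qed.

Lemma sqnorm_add_scal n m v h t :
  sqnorm n m (fun i k => v i k + t * h i k) = sqnorm n m v + 2 * t * dot n m h v + t ^ 2 * sqnorm n m h.
Proof.
  unfold sqnorm, dot. rewrite <- !dsum_scal, <- !dsum_plus. apply dsum_ext; intros; ring.
Qed.

Lemma quadratic_nonneg_discr A B C :
  0 <= C -> (forall t, 0 <= A + 2 * B * t + C * t ^ 2) -> B ^ 2 <= A * C.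
Proof.
  intros [HC|<-] H.
  - specialize (H (- B / C)).
    replace (A + 2 * B * (- B / C) + C * (- B / C) ^ 2) with ((A * C - B ^ 2) / C) in H
      by (field; lra).
    apply Rmult_le_compat_r with (r := C) in H; [|lra].
    replace ((A * C - B ^ 2) / C * C) with (A * C - B ^ 2) in H by (field; lra). lra.
  - destruct (Req_dec B 0) as [->|HB]; [nra|].
    specialize (H (- (A + 1) / (2 * B))).
    replace (A + 2 * B * (- (A + 1) / (2 * B)) + 0 * (- (A + 1) / (2 * B)) ^ 2) with (-1) in H
      by (field; auto). lra.
Qed.

Lemma sqr_le_sqrt_mult a b c : 0 <= b -> 0 <= c -> a ^ 2 <= b * c -> a <= sqrt b * sqrt c.
Proof.
  intros Hb Hc H. rewrite <- sqrt_mult by auto. destruct (Rle_or_lt a 0).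
  - pose proof (sqrt_pos (b * c)); lra.
  - apply Rsqr_incr_0_var; [|apply sqrt_pos]. rewrite Rsqr_sqrt by nra. unfold Rsqr; nra.
Qed.

Lemma cauchy_schwarz n m u v : dot n m u v <= sqrt (sqnorm n m u) * sqrt (sqnorm n m v).
Proof.
  apply sqr_le_sqrt_mult; try apply sqnorm_nonneg. rewrite Rmult_comm.
  apply quadratic_nonneg_discr; [apply sqnorm_nonneg|].
  intros t. pose proof (sqnorm_nonneg n m (fun i k => v i k + t * u i k)) as H.
  rewrite sqnorm_add_scal in H. lra.
Qed.

Lemma sqrt_sum_sqr_le_sum_abs n x : sqrt (rsum n (fun k => x k * x k)) <= rsum n (fun k => Rabs (x k)).
Proof.
  assert (Hs : 0 <= rsum n (fun k => Rabs (x k))) by (apply rsum_nonneg; intros; apply Rabs_pos).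
  rewrite <- (sqrt_pow2 _ Hs). apply sqrt_le_1_alt.
  induction n as [|n IH]; simpl; [lra|].
  assert (0 <= rsum n (fun k => Rabs (x k))) by (apply rsum_nonneg; intros; apply Rabs_pos).
  assert (x n * x n = Rabs (x n) * Rabs (x n)) by (rewrite <- Rabs_mult; symmetry; apply Rabs_right; nra).
  pose proof (Rabs_pos (x n)). simpl in IH. nra.
Qed.

(** * Convergent subsequences *)

Definition strictly_increasing (phi : nat -> nat) := forall a, (phi a < phi (S a))%nat.

Lemma strictly_increasing_lt phi : strictly_increasing phi ->
  forall a b, (a < b)%nat -> (phi a < phi b)%nat.
Proof. intros H a b Hab. induction Hab; [apply H|]. specialize (H m). lia. Qed.

Lemma strictly_increasing_ge phi : strictly_increasing phi -> forall a, (a <= phi a)%nat.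
Proof. intros H a. induction a; [lia|]. specialize (H a). lia. Qed.

Lemma strictly_increasing_comp phi psi :
  strictly_increasing phi -> strictly_increasing psi -> strictly_increasing (fun a => phi (psi a)).
Proof. intros Hphi Hpsi a. apply strictly_increasing_lt; auto. Qed.

Lemma Un_cv_subseq u l phi : strictly_increasing phi -> Un_cv u l -> Un_cv (fun a => u (phi a)) l.
Proof.
  intros Hphi Hc eps He. destruct (Hc eps He) as [N HN]. exists N. intros a Ha. apply HN.
  pose proof (strictly_increasing_ge phi Hphi a). lia.
Qed.

Lemma Un_cv_const c : Un_cv (fun _ => c) c.
Proof. intros eps He; exists O; intros; unfold R_dist; rewrite Rminus_diag, Rabs_R0; auto. Qed.

Lemma Un_cv_ext u v l : (forall a, u a = v a) -> Un_cv u l -> Un_cv v l.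
Proof. intros E H eps He. destruct (H eps He) as [N HN]; exists N; intros; rewrite <- E; auto. Qed.

Lemma Un_cv_rsum n (f : nat -> nat -> R) (l : nat -> R) :
  (forall i, (i < n)%nat -> Un_cv (fun a => f a i) (l i)) -> Un_cv (fun a => rsum n (f a)) (rsum n l).
Proof.
  induction n; intros H; simpl; [apply Un_cv_const|].
  apply CV_plus; [apply IHn; intros; apply H|apply H]; lia.
Qed.

Lemma Un_cv_dsum n m (f : nat -> nat -> nat -> R) (l : nat -> nat -> R) :
  (forall i k, (i < n)%nat -> (k < m)%nat -> Un_cv (fun a => f a i k) (l i k)) ->
  Un_cv (fun a => dsum n m (f a)) (dsum n m l).
Proof. intros H. apply Un_cv_rsum; intros. apply (Un_cv_rsum m (fun a => f a i)); auto. Qed.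

Lemma inv_INR_S_lt eps : 0 < eps -> exists N, forall a, (N <= a)%nat -> / (INR a + 1) < eps.
Proof.
  intros He. destruct (archimed_cor1 eps He) as [N [HN HN0]]. exists N. intros a Ha.
  apply le_INR in Ha. assert (0 < INR N) by (apply lt_0_INR; auto).
  eapply Rle_lt_trans; [|apply HN]. apply Rinv_le_contravar; lra.
Qed.

(** Bolzano-Weierstrass, in the subsequence form: [Bolzano_Weierstrass] only
    provides an accumulation point. *)
Lemma bounded_subseq_cv (u : nat -> R) : (forall N, -1 <= u N <= 1) ->
  exists phi l, strictly_increasing phi /\ Un_cv (fun a => u (phi a)) l.
Proof.
  intros Hb.
  destruct (Bolzano_Weierstrass u (fun c => -1 <= c <= 1) (compact_P3 (-1) 1) Hb) as [l Hl].
  assert (Hsel : forall k N : nat, exists q, (N <= q)%nat /\ Rabs (u q - l) < / (INR k + 1)).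
  { intros k N. assert (Hp : 0 < / (INR k + 1)) by (apply Rinv_0_lt_compat; pose proof (pos_INR k); lra).
    destruct (Hl (fun y => Rabs (y - l) < / (INR k + 1)) N) as [q Hq].
    - exists (mkposreal _ Hp). intros y Hy. exact Hy.
    - exists q; auto. }
  set (sel := fun k N => proj1_sig (constructive_indefinite_description _ (Hsel k N))).
  assert (Hs : forall k N, (N <= sel k N)%nat /\ Rabs (u (sel k N) - l) < / (INR k + 1))
    by (intros; unfold sel; destruct (constructive_indefinite_description _ _); auto).
  set (phi := fix f a := match a with O => sel O O | S a' => sel (S a') (S (f a')) end).
  exists phi, l. split.
  - intros a. simpl. destruct (Hs (S a) (S (phi a))). lia.
  - intros eps He. destruct (inv_INR_S_lt eps He) as [N HN]. exists N. intros a Ha. unfold R_dist.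
    assert (Rabs (u (phi a) - l) < / (INR a + 1)) by (destruct a; simpl; apply Hs).
    specialize (HN a ltac:(lia)). lra.
Qed.

Lemma bounded_subseq_cv_list (U : nat -> nat -> nat -> R) (cs : list (nat * nat)) :
  (forall N i k, In (i, k) cs -> -1 <= U N i k <= 1) ->
  exists phi (v : nat -> nat -> R), strictly_increasing phi /\
    forall i k, In (i, k) cs -> Un_cv (fun a => U (phi a) i k) (v i k).
Proof.
  induction cs as [|[i0 k0] cs IH]; intros Hb.
  - exists (fun a => a), (fun _ _ => 0). split; [intros a; lia|intros i k []].
  - destruct IH as [phi [v [Hphi Hv]]]; [intros; apply Hb; simpl; auto|].
    destruct (bounded_subseq_cv (fun a => U (phi a) i0 k0)) as [psi [l [Hpsi Hl]]];
      [intros; apply Hb; simpl; auto|].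
    exists (fun a => phi (psi a)), (fun i k => if (Nat.eqb i i0 && Nat.eqb k k0)%bool then l else v i k).
    split; [apply strictly_increasing_comp; auto|].
    intros i k Hin. destruct (Nat.eqb_spec i i0), (Nat.eqb_spec k k0); simpl; [subst; exact Hl|..];
      (destruct Hin as [E|Hin]; [inversion E; lia|]);
      apply (Un_cv_subseq (fun a => U (phi a) i k)); auto.
Qed.

Lemma bounded_subseq_cv_vec n m (U : nat -> nat -> nat -> R) :
  (forall N i k, (i < n)%nat -> (k < m)%nat -> -1 <= U N i k <= 1) ->
  exists phi (v : nat -> nat -> R), strictly_increasing phi /\
    forall i k, (i < n)%nat -> (k < m)%nat -> Un_cv (fun a => U (phi a) i k) (v i k).
Proof.
  intros Hb.
  assert (Hcs : forall i k, In (i, k) (list_prod (seq 0 n) (seq 0 m)) <-> (i < n)%nat /\ (k < m)%nat)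
    by (intros; rewrite in_prod_iff, !in_seq; lia).
  destruct (bounded_subseq_cv_list U (list_prod (seq 0 n) (seq 0 m))) as [phi [v [Hphi Hv]]].
  - intros N i k Hin. apply Hcs in Hin. apply Hb; tauto.
  - exists phi, v. split; auto. intros; apply Hv, Hcs; auto.
Qed.

(** * Symmetric kernels and the Rayleigh quotient *)

Section SymmetricKernel.
Variables (n m : nat) (K : nat -> nat -> nat -> nat -> R).
Hypothesis K_sym : forall i k j l, (i < n)%nat -> (k < m)%nat -> (j < n)%nat -> (l < m)%nat ->
  K i k j l = K j l i k.

Definition kapply (v : nat -> nat -> R) i k := dsum n m (fun j l => K i k j l * v j l).
Definition kquad v := dot n m v (kapply v).

Lemma kapply_ext u v : (forall i k, (i < n)%nat -> (k < m)%nat -> u i k = v i k) ->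
  forall i k, kapply u i k = kapply v i k.
Proof. intros H i k. apply dsum_ext; intros. rewrite H; auto. Qed.

Lemma kquad_ext u v : (forall i k, (i < n)%nat -> (k < m)%nat -> u i k = v i k) -> kquad u = kquad v.
Proof. intros H. apply dsum_ext; intros. rewrite H, (kapply_ext u v H); auto. Qed.

Lemma kapply_add u v i k : kapply (fun j l => u j l + v j l) i k = kapply u i k + kapply v i k.
Proof. unfold kapply. rewrite <- dsum_plus. apply dsum_ext; intros; ring. Qed.

Lemma kapply_scal c u i k : kapply (fun j l => c * u j l) i k = c * kapply u i k.
Proof. unfold kapply. rewrite <- dsum_scal. apply dsum_ext; intros; ring. Qed.

Lemma kquad_scal c u : kquad (fun i k => c * u i k) = c ^ 2 * kquad u.
Proof.
  unfold kquad, dot. rewrite <- dsum_scal. apply dsum_ext; intros. rewrite kapply_scal. ring.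
Qed.

Lemma kquad_zero : kquad (fun _ _ => 0) = 0.
Proof. unfold kquad, dot, dsum. rewrite (rsum_ext n _ (fun _ => 0)), rsum_const; [ring|].
  intros. rewrite (rsum_ext m _ (fun _ => 0)), rsum_const; [ring|]. intros; ring. Qed.

Lemma kapply_sym u v : dot n m u (kapply v) = dot n m v (kapply u).
Proof.
  unfold dot, kapply. transitivity (dsum n m (fun i k => dsum n m (fun j l => u i k * K i k j l * v j l))).
  { apply dsum_ext; intros. rewrite <- dsum_scal. apply dsum_ext; intros; ring. }
  transitivity (dsum n m (fun j l => dsum n m (fun i k => v j l * K j l i k * u i k))).
  2:{ apply dsum_ext; intros. rewrite <- dsum_scal. apply dsum_ext; intros; ring. }
  unfold dsum. rewrite (rsum_ext n _ (fun i => rsum n (fun j => rsum m (fun k => rsum m (fun l =>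
    u i k * K i k j l * v j l))))) by (intros; apply rsum_swap).
  rewrite rsum_swap. apply rsum_ext; intros j Hj.
  rewrite (rsum_ext n _ (fun i => rsum m (fun l => rsum m (fun k => u i k * K i k j l * v j l))))
    by (intros; apply rsum_swap).
  rewrite rsum_swap. apply rsum_ext; intros l Hl. apply rsum_ext; intros i Hi. apply rsum_ext; intros k Hk.
  rewrite K_sym by auto. ring.
Qed.

Lemma kquad_add_scal v h t :
  kquad (fun i k => v i k + t * h i k) = kquad v + 2 * t * dot n m h (kapply v) + t ^ 2 * kquad h.
Proof.
  unfold kquad. transitivity (dot n m v (kapply v) + t * dot n m v (kapply h)
    + t * dot n m h (kapply v) + t ^ 2 * dot n m h (kapply h)).
  - unfold dot. rewrite <- !dsum_scal, <- !dsum_plus. apply dsum_ext; intros.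
    rewrite (kapply_add v (fun j l => t * h j l)), kapply_scal. ring.
  - rewrite (kapply_sym v h). ring.
Qed.

Lemma kquad_sub u v :
  kquad u - kquad v = dot n m (fun i k => u i k - v i k) (kapply (fun i k => u i k + v i k)).
Proof.
  unfold kquad. transitivity (dot n m u (kapply u) + dot n m u (kapply v)
    - dot n m v (kapply u) - dot n m v (kapply v)).
  - rewrite (kapply_sym u v). ring.
  - unfold dot. rewrite <- !dsum_plus, <- !dsum_minus. apply dsum_ext; intros.
    rewrite kapply_add. ring.
Qed.

Definition kabs_total := dsum n m (fun i k => dsum n m (fun j l => Rabs (K i k j l))).

Lemma kapply_abs_le v B i k : (i < n)%nat -> (k < m)%nat -> 0 <= B ->
  (forall j l, (j < n)%nat -> (l < m)%nat -> Rabs (v j l) <= B) -> Rabs (kapply v i k) <= B * kabs_total.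
Proof.
  intros Hi Hk HB H. unfold kapply. eapply Rle_trans; [apply dsum_abs|].
  apply Rle_trans with (B * dsum n m (fun j l => Rabs (K i k j l))).
  - rewrite <- dsum_scal. apply dsum_le; intros j l Hj Hl. rewrite Rabs_mult.
    specialize (H j l Hj Hl). pose proof (Rabs_pos (K i k j l)). nra.
  - apply Rmult_le_compat_l; auto. unfold kabs_total.
    apply (dsum_term_le n m (fun i k => dsum n m (fun j l => Rabs (K i k j l)))); auto.
    intros; apply dsum_nonneg; intros; apply Rabs_pos.
Qed.

Lemma kabs_total_nonneg : 0 <= kabs_total.
Proof. apply dsum_nonneg; intros; apply dsum_nonneg; intros; apply Rabs_pos. Qed.

Lemma kquad_le_on_ball u : (forall i k, (i < n)%nat -> (k < m)%nat -> Rabs (u i k) <= 1) ->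
  kquad u <= kabs_total.
Proof.
  intros H. unfold kquad, dot, kapply. apply dsum_le; intros i k Hi Hk.
  rewrite <- dsum_scal. apply dsum_le; intros j l Hj Hl.
  pose proof (H i k Hi Hk). pose proof (H j l Hj Hl). pose proof (Rabs_pos (K i k j l)).
  eapply Rle_trans; [apply Rle_abs|]. rewrite !Rabs_mult.
  pose proof (Rabs_pos (u i k)). pose proof (Rabs_pos (u j l)).
  assert (Rabs (K i k j l) * Rabs (u j l) <= Rabs (K i k j l)) by nra. nra.
Qed.

Lemma kquad_le_of_unit mu : (forall u, sqnorm n m u = 1 -> kquad u <= mu) ->
  forall u, kquad u <= mu * sqnorm n m u.
Proof.
  intros Hle u. destruct (Req_dec (sqnorm n m u) 0) as [H0|H0].
  - rewrite (kquad_ext u (fun _ _ => 0)), kquad_zero, H0 by (apply sqnorm_eq0; auto). lra.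
  - pose proof (sqnorm_nonneg n m u). set (c := sqrt (sqnorm n m u)).
    assert (Hc : 0 < c) by (apply sqrt_lt_R0; lra).
    assert (Hc2 : c ^ 2 = sqnorm n m u) by (unfold c; simpl; rewrite Rmult_1_r; apply sqrt_sqrt; lra).
    specialize (Hle (fun i k => / c * u i k)). rewrite sqnorm_scal, kquad_scal, <- Hc2 in Hle.
    rewrite <- Hc2. replace ((/ c) ^ 2 * c ^ 2) with 1 in Hle by (field; lra).
    specialize (Hle eq_refl). apply (Rmult_le_compat_r (c ^ 2)) in Hle; [|nra].
    replace ((/ c) ^ 2 * kquad u * c ^ 2) with (kquad u) in Hle by (field; lra). lra.
Qed.

(** A maximiser [v] of the Rayleigh quotient is an eigenvector: the quadratic
    [t |-> mu |v + t h|^2 - Q(v + t h)] is nonnegative and vanishes at [t = 0],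
    so its linear coefficient [|mu v - K v|^2] (for [h = mu v - K v]) is zero. *)
Lemma kquad_maximizer_eigen mu v : (forall u, kquad u <= mu * sqnorm n m u) ->
  kquad v = mu * sqnorm n m v -> forall i k, (i < n)%nat -> (k < m)%nat -> kapply v i k = mu * v i k.
Proof.
  intros Hle Hv. set (h := fun i k => mu * v i k - kapply v i k).
  assert (Hdisc : forall t, 0 <= 0 + 2 * (mu * dot n m h v - dot n m h (kapply v)) * t
                                 + (mu * sqnorm n m h - kquad h) * t ^ 2).
  { intros t. specialize (Hle (fun i k => v i k + t * h i k)).
    rewrite kquad_add_scal, sqnorm_add_scal in Hle. lra. }
  apply quadratic_nonneg_discr in Hdisc; [|specialize (Hle h); lra].
  assert (E : mu * dot n m h v - dot n m h (kapply v) = sqnorm n m h).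
  { unfold sqnorm, dot. rewrite <- dsum_scal, <- dsum_minus. apply dsum_ext; intros. unfold h. ring. }
  rewrite E in Hdisc. assert (Hh : sqnorm n m h = 0) by (pose proof (sqnorm_nonneg n m h); nra).
  intros i k Hi Hk. pose proof (sqnorm_eq0 n m h Hh i k Hi Hk). unfold h in *. lra.
Qed.

Lemma kquad_sup_attained : (0 < n)%nat -> (0 < m)%nat ->
  exists mu v, sqnorm n m v = 1 /\ kquad v = mu /\ forall u, sqnorm n m u = 1 -> kquad u <= mu.
Proof.
  intros Hn Hm. set (A := fun x => exists u, sqnorm n m u = 1 /\ x = kquad u).
  destruct (sqnorm_unit_exists n m Hn Hm) as [e Hunit].
  destruct (completeness A) as [mu [Hub Hlub]].
  { exists kabs_total. intros x [u [Hu ->]]. apply kquad_le_on_ball, sqnorm_unit_abs_le, Hu. }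
  { exists (kquad e), e. auto. }
  assert (Hle : forall u, sqnorm n m u = 1 -> kquad u <= mu) by (intros u Hu; apply Hub; exists u; auto).
  assert (Happrox : forall N : nat, exists u, sqnorm n m u = 1 /\ mu - / (INR N + 1) < kquad u).
  { intros N. apply NNPP. intros Hno.
    assert (0 < / (INR N + 1)) by (apply Rinv_0_lt_compat; pose proof (pos_INR N); lra).
    assert (mu <= mu - / (INR N + 1)); [|lra].
    apply Hlub. intros x [u [Hu ->]]. apply Rnot_lt_le. intros Hlt. apply Hno. exists u; auto. }
  set (U := fun N => proj1_sig (constructive_indefinite_description _ (Happrox N))).
  assert (HU : forall N, sqnorm n m (U N) = 1 /\ mu - / (INR N + 1) < kquad (U N))
    by (intros; unfold U; destruct (constructive_indefinite_description _ _); auto).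
  destruct (bounded_subseq_cv_vec n m U) as [phi [v [Hphi Hv]]].
  { intros N i k Hi Hk. pose proof (sqnorm_unit_abs_le n m _ (proj1 (HU N)) i k Hi Hk) as H.
    revert H; unfold Rabs; destruct (Rcase_abs _); lra. }
  assert (Hnorm : sqnorm n m v = 1).
  { apply (UL_sequence (fun a => sqnorm n m (U (phi a)))).
    - apply Un_cv_dsum; intros. apply CV_mult; apply Hv; auto.
    - apply (Un_cv_ext (fun _ => 1)); [intros a; rewrite (proj1 (HU (phi a))); auto|apply Un_cv_const]. }
  assert (Hquad : kquad v = mu).
  { apply (UL_sequence (fun a => kquad (U (phi a)))).
    - apply Un_cv_dsum; intros. apply CV_mult; [apply Hv; auto|].
      apply Un_cv_dsum; intros. apply CV_mult; [apply Un_cv_const|apply Hv; auto].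
    - intros eps He. destruct (inv_INR_S_lt eps He) as [N HN]. exists N. intros a Ha. unfold R_dist.
      destruct (HU (phi a)) as [H1 H2]. pose proof (Hle _ H1).
      pose proof (strictly_increasing_ge phi Hphi a). specialize (HN (phi a) ltac:(lia)).
      rewrite Rabs_left1 by lra. lra. }
  exists mu, v. auto.
Qed.

Lemma rayleigh_max_eigen : (0 < n)%nat -> (0 < m)%nat ->
  exists (mu : R) (v : nat -> nat -> R), (exists i k, (i < n)%nat /\ (k < m)%nat /\ v i k <> 0) /\
    (forall i k, (i < n)%nat -> (k < m)%nat -> kapply v i k = mu * v i k) /\
    forall u, kquad u <= mu * sqnorm n m u.
Proof.
  intros Hn Hm. destruct (kquad_sup_attained Hn Hm) as [mu [v [Hv1 [Hv2 Hmax]]]].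
  pose proof (kquad_le_of_unit mu Hmax) as Hle. exists mu, v. split; [|split; auto].
  - apply NNPP. intros Hno. assert (sqnorm n m v = 0); [|lra].
    unfold sqnorm, dot, dsum. rewrite (rsum_ext n _ (fun _ => 0)), rsum_const; [ring|]. intros i Hi.
    rewrite (rsum_ext m _ (fun _ => 0)), rsum_const; [ring|]. intros k Hk.
    destruct (Req_dec (v i k) 0) as [E|E]; [rewrite E; ring|]. exfalso; apply Hno; exists i, k; auto.
  - apply kquad_maximizer_eigen; auto. rewrite Hv1, Hv2. ring.
Qed.

End SymmetricKernel.

(** * The matrix M *)

Lemma leader_reach_lt n w p i : leader_reach n w p i -> (i < n)%nat.
Proof. induction 1; auto. Qed.

Section Graph.
Variables (n m : nat) (w : nat -> nat -> R) (p : nat -> R).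
Hypothesis Hgraph : graph_ok n w p.

Lemma w_sym i j : (i < n)%nat -> (j < n)%nat -> w i j = w j i.
Proof. apply Hgraph. Qed.

Lemma Mmat_sym i k j l : (i < n)%nat -> (k < m)%nat -> (j < n)%nat -> (l < m)%nat ->
  Mmat n m w p i k j l = Mmat n m w p j l i k.
Proof.
  intros Hi _ Hj _. unfold Mmat, Hmat, laplacian.
  destruct (Nat.eqb_spec i j), (Nat.eqb_spec j i), (Nat.eqb_spec k l), (Nat.eqb_spec l k);
    subst; try lia; rewrite ?w_sym with (i := i) (j := j) by auto; ring.
Qed.

Lemma Mvec_laplacian v i k : (i < n)%nat -> (k < m)%nat ->
  Mvec n m w p v i k = rsum n (fun j => w i j * (v i k - v j k)) + p i * v i k.
Proof.
  intros Hi Hk. transitivity (rsum n (fun j => Hmat n w p i j * v j k)).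
  { apply rsum_ext; intros j Hj. rewrite <- (rsum_delta m k (fun l => Hmat n w p i j * v j l)) by auto.
    apply rsum_ext; intros l Hl. unfold Mmat. destruct (Nat.eqb k l); ring. }
  unfold Hmat, laplacian.
  transitivity (rsum n (fun j => (if Nat.eqb i j then 1 else 0) * ((rsum n (fun l => w i l) + p i) * v j k)
                                 + - (w i j * v j k) + (if Nat.eqb i j then 1 else 0) * (w i j * v j k))).
  - apply rsum_ext; intros j Hj. destruct (Nat.eqb i j); ring.
  - rewrite !rsum_plus, !rsum_delta, (proj1 (proj2 (proj2 Hgraph)) i Hi), rsum_opp by auto.
    rewrite (rsum_ext n (fun j => w i j * (v i k - v j k)) (fun j => v i k * w i j - w i j * v j k))
      by (intros; ring).
    rewrite rsum_minus, rsum_scal. change (rsum n (fun l => w i l)) with (rsum n (w i)). ring.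
Qed.

Lemma Mvec_sliding_var a a0 t i k : (i < n)%nat -> (k < m)%nat ->
  Mvec n m w p (fun i k => a i k t - a0 k t) i k = sliding_var n w p a a0 i k t.
Proof.
  intros. rewrite Mvec_laplacian by auto. unfold sliding_var. f_equal.
  apply rsum_ext; intros; f_equal; ring.
Qed.

Lemma Mquad_sum_sqr v : Mquad n m w p v =
  rsum m (fun k => dsum n n (fun i j => / 2 * w i j * (v i k - v j k) ^ 2) + rsum n (fun i => p i * v i k ^ 2)).
Proof.
  unfold Mquad.
  transitivity (rsum n (fun i => rsum m (fun k =>
    rsum n (fun j => w i j * v i k * (v i k - v j k)) + p i * v i k ^ 2))).
  { apply rsum_ext; intros i Hi; apply rsum_ext; intros k Hk. rewrite Mvec_laplacian by auto.
    rewrite (rsum_ext n (fun j => w i j * v i k * _) (fun j => v i k * (w i j * (v i k - v j k))))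
      by (intros; ring).
    rewrite rsum_scal. ring. }
  rewrite rsum_swap. apply rsum_ext; intros k Hk. rewrite rsum_plus. f_equal.
  set (S := dsum n n (fun i j => w i j * v i k * (v i k - v j k))).
  assert (Hswap : S = dsum n n (fun i j => w i j * v j k * (v j k - v i k))).
  { unfold S, dsum. rewrite rsum_swap. apply rsum_ext; intros; apply rsum_ext; intros.
    rewrite w_sym by auto. ring. }
  transitivity (/ 2 * (S + S)); [unfold S, dsum; field|].
  rewrite Hswap at 2. unfold S. rewrite <- dsum_plus, <- dsum_scal. apply dsum_ext; intros; ring.
Qed.

Lemma edge_term_nonneg (v : nat -> nat -> R) k i j : (i < n)%nat -> (j < n)%nat ->
  0 <= / 2 * w i j * (v i k - v j k) ^ 2.
Proof.
  intros Hi Hj. pose proof (proj1 (proj2 Hgraph) i j Hi Hj). pose proof (pow2_ge_0 (v i k - v j k)). nra.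
Qed.

Lemma pin_term_nonneg (v : nat -> nat -> R) k i : (i < n)%nat -> 0 <= p i * v i k ^ 2.
Proof. intros Hi. pose proof (proj2 (proj2 (proj2 Hgraph)) i Hi). pose proof (pow2_ge_0 (v i k)). nra. Qed.

Lemma Mquad_component_nonneg (v : nat -> nat -> R) k :
  0 <= dsum n n (fun i j => / 2 * w i j * (v i k - v j k) ^ 2) + rsum n (fun i => p i * v i k ^ 2).
Proof.
  apply Rplus_le_le_0_compat; [apply dsum_nonneg|apply rsum_nonneg];
    intros; auto using edge_term_nonneg, pin_term_nonneg.
Qed.

Lemma Mquad_nonneg v : 0 <= Mquad n m w p v.
Proof. rewrite Mquad_sum_sqr. apply rsum_nonneg; intros; apply Mquad_component_nonneg. Qed.

(** A zero of the form vanishes at every pinned node and propagates along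
    every edge of positive weight. *)
Lemma Mquad_eq0 v : assumption_A1 n w p -> Mquad n m w p v = 0 ->
  forall i k, (i < n)%nat -> (k < m)%nat -> v i k = 0.
Proof.
  intros HA1 HQ i k Hi Hk. rewrite Mquad_sum_sqr in HQ.
  pose proof (rsum_eq0_nonneg m _ (fun k _ => Mquad_component_nonneg v k) HQ k Hk) as Hk0. cbv beta in Hk0.
  pose proof (dsum_nonneg n n _ (edge_term_nonneg v k)). pose proof (rsum_nonneg n _ (pin_term_nonneg v k)).
  pose proof (dsum_eq0_nonneg n n _ (edge_term_nonneg v k) ltac:(lra)) as Hedge0.
  pose proof (rsum_eq0_nonneg n _ (pin_term_nonneg v k) ltac:(lra)) as Hpin0.
  induction (HA1 i Hi) as [i Hi' Hpi | i j Hr IH Hj Hwij].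
  - specialize (Hpin0 i Hi').
    apply Rmult_integral in Hpin0 as [Hp0|Hv]; [lra|].
    apply NNPP; intros Hne; exact (pow_nonzero _ 2 Hne Hv).
  - specialize (Hedge0 i j (leader_reach_lt _ _ _ _ Hr) Hj).
    specialize (IH (leader_reach_lt _ _ _ _ Hr)).
    apply Rmult_integral in Hedge0 as [Hw0|Hv]; [lra|].
    apply NNPP; intros Hne; apply (pow_nonzero (v i k - v j k) 2); [lra|exact Hv].
Qed.

Lemma is_eigenvalue_pos lam : assumption_A1 n w p -> is_eigenvalue n m w p lam -> 0 < lam.
Proof.
  intros HA [v [[i [k [Hi [Hk Hnz]]]] Hev]].
  assert (HQ : Mquad n m w p v = lam * sqnorm n m v).
  { unfold Mquad, sqnorm, dot. fold (dsum n m (fun i k => v i k * Mvec n m w p v i k)).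
    rewrite <- dsum_scal. apply dsum_ext; intros. rewrite Hev by auto. ring. }
  assert (Hs : 0 < sqnorm n m v).
  { destruct (sqnorm_nonneg n m v) as [H|H]; auto. exfalso. apply Hnz, (sqnorm_eq0 n m v); auto. }
  destruct (Mquad_nonneg v) as [H0|H0].
  - rewrite HQ in H0. nra.
  - exfalso. apply Hnz, (Mquad_eq0 v HA); auto.
Qed.

Lemma is_eigenvalue_dims lam : is_eigenvalue n m w p lam -> (0 < n)%nat /\ (0 < m)%nat.
Proof. intros [v [[i [k [Hi [Hk _]]]] _]]. lia. Qed.

Lemma Mquad_le_lambda_max lmax : is_lambda_max n m w p lmax ->
  forall u, Mquad n m w p u <= lmax * sqnorm n m u.
Proof.
  intros [He Hmax] u. destruct (is_eigenvalue_dims _ He) as [Hn Hm].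
  destruct (rayleigh_max_eigen n m (Mmat n m w p) Mmat_sym Hn Hm) as [mu [v [Hnz [Hev Hle]]]].
  assert (mu <= lmax) by (apply Hmax; exists v; auto).
  pose proof (sqnorm_nonneg n m u). specialize (Hle u).
  change (kquad n m (Mmat n m w p) u) with (Mquad n m w p u) in Hle. nra.
Qed.

(** The least eigenvalue of [M] is the greatest one of [-M]. *)
Lemma lambda_min_le_Mquad lmin : is_lambda_min n m w p lmin ->
  forall u, lmin * sqnorm n m u <= Mquad n m w p u.
Proof.
  intros [He Hmin] u. destruct (is_eigenvalue_dims _ He) as [Hn Hm].
  set (negM := fun i k j l => - Mmat n m w p i k j l).
  assert (HnegM : forall v i k, kapply n m negM v i k = - Mvec n m w p v i k).
  { intros v i k. unfold kapply.
    change (Mvec n m w p v i k) with (dsum n m (fun j l => Mmat n m w p i k j l * v j l)).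
    rewrite <- dsum_opp. apply dsum_ext; intros. unfold negM. ring. }
  destruct (rayleigh_max_eigen n m negM) as [mu [v [Hnz [Hev Hle]]]]; auto.
  { intros; unfold negM; rewrite Mmat_sym; auto. }
  assert (lmin <= - mu).
  { apply Hmin. exists v. split; auto. intros i k Hi Hk. specialize (Hev i k Hi Hk). rewrite HnegM in Hev. lra. }
  assert (Hq : kquad n m negM u = - Mquad n m w p u).
  { unfold kquad, dot. change (Mquad n m w p u) with (dsum n m (fun i k => u i k * Mvec n m w p u i k)).
    rewrite <- dsum_opp. apply dsum_ext; intros. rewrite HnegM. ring. }
  specialize (Hle u). rewrite Hq in Hle. pose proof (sqnorm_nonneg n m u). nra.
Qed.

End Graph.

(** * Monotonicity from local decrease *)

Lemma Rle_of_le_plus_eps A B L : 0 <= L -> (forall eps, 0 < eps -> A <= B + eps * L) -> A <= B.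
Proof.
  intros HL H. apply Rnot_lt_le. intros Hlt.
  destruct HL as [HL|<-]; [|specialize (H 1 Rlt_0_1); lra].
  specialize (H ((A - B) / (2 * L)) ltac:(apply Rdiv_lt_0_compat; lra)).
  replace ((A - B) / (2 * L) * L) with ((A - B) / 2) in H by (field; lra). lra.
Qed.

Lemma real_induction (a b : R) (Q : R -> Prop) : a <= b -> Q a ->
  (forall u, a <= u < b -> Q u -> exists eta, 0 < eta /\ forall v, u < v < u + eta -> v <= b -> Q v) ->
  (forall u, a < u <= b -> (forall v, a <= v < u -> Q v) -> Q u) -> Q b.
Proof.
  intros Hab Qa Hright Hleft.
  set (S := fun x => a <= x <= b /\ forall v, a <= v <= x -> Q v).
  assert (Sa : S a) by (split; [lra|]; intros v Hv; replace v with a by lra; auto).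
  destruct (completeness S) as [s [Hub Hlub]]; [exists b; intros x [Hx _]; lra|exists a; auto|].
  assert (Has : a <= s) by (apply Hub, Sa).
  assert (Hsb : s <= b) by (apply Hlub; intros x [Hx _]; lra).
  assert (Hbelow : forall v, a <= v < s -> Q v).
  { intros v Hv. apply NNPP; intro Hno. assert (s <= v); [|lra]. apply Hlub. intros x [Hx Hx2].
    apply Rnot_lt_le. intros Hlt. apply Hno, Hx2. lra. }
  assert (Qs : Q s) by (destruct (Req_dec s a) as [->|Hne]; auto; apply Hleft; [lra|auto]).
  destruct (Req_dec s b) as [<-|Hne]; auto. exfalso.
  destruct (Hright s ltac:(lra) Qs) as [eta [Heta Hext]].
  set (v' := Rmin (s + eta / 2) b).
  assert (Hv' : s < v' <= b /\ v' <= s + eta / 2)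
    by (unfold v'; split; [split; [apply Rmin_glb_lt; lra|apply Rmin_r]|apply Rmin_l]).
  assert (v' <= s); [|lra].
  apply Hub. split; [lra|]. intros v Hv. destruct (Rle_or_lt v s) as [Hvs|Hvs].
  - destruct (Req_dec v s) as [->|]; auto. apply Hbelow; lra.
  - apply Hext; lra.
Qed.

Definition locally_nonincreasing_at (a : R) (g : R -> R) (x : R) :=
  exists eta, 0 < eta /\ forall h, 0 < h < eta -> g (x + h) <= g x /\ (a <= x - h -> g x <= g (x - h)).

Lemma locally_nonincreasing_nonincreasing (g : R -> R) a b : a <= b ->
  (forall x, a <= x <= b -> locally_nonincreasing_at a g x) -> g b <= g a.
Proof.
  intros Hab Hloc. apply (real_induction a b (fun u => g u <= g a)); auto; [lra| |].
  - intros u Hu Hq. destruct (Hloc u ltac:(lra)) as [eta [He Hg]]. exists eta; split; auto.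
    intros v Hv _. destruct (Hg (v - u) ltac:(lra)) as [H1 _]. replace (u + (v - u)) with v in H1 by ring. lra.
  - intros u Hu IH. destruct (Hloc u ltac:(lra)) as [eta [He Hg]].
    set (h := Rmin (eta / 2) (u - a)).
    assert (Hh : 0 < h < eta /\ h <= u - a)
      by (unfold h; split; [split; [apply Rmin_pos|eapply Rle_lt_trans; [apply Rmin_l|]]|apply Rmin_r]; lra).
    destruct (Hg h ltac:(lra)) as [_ H2]. specialize (H2 ltac:(lra)). specialize (IH (u - h) ltac:(lra)). lra.
Qed.

Lemma derivable_neg_locally_nonincreasing a g x l : derivable_pt_lim g x l -> l < 0 ->
  locally_nonincreasing_at a g x.
Proof.
  intros Hd Hl. destruct (Hd (- l / 2) ltac:(lra)) as [[eta He] Heta]. simpl in Heta.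
  exists eta. split; auto. intros h Hh. split; [|intros _].
  - specialize (Heta h ltac:(lra) ltac:(rewrite Rabs_right; lra)).
    apply Rabs_def2 in Heta as [H1 _]. assert (g (x + h) - g x < 0); [|lra].
    replace (g (x + h) - g x) with ((g (x + h) - g x) / h * h) by (field; lra). nra.
  - specialize (Heta (- h) ltac:(lra) ltac:(rewrite Rabs_left; lra)).
    apply Rabs_def2 in Heta as [H1 _]. replace (x + - h) with (x - h) in H1 by ring.
    assert (g (x - h) - g x >= 0); [|lra].
    replace (g (x - h) - g x) with (- ((g (x - h) - g x) / - h * h)) by (field; lra). nra.
Qed.

Lemma deriv_within_lt_locally_nonincreasing t0 f s d c : t0 <= s -> deriv_within_from t0 f s d -> d < c ->
  locally_nonincreasing_at t0 (fun x => f x - c * x) s.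
Proof.
  intros Hs H Hdc. destruct (H ((c - d) / 2) ltac:(lra)) as [del [Hd Hdel]].
  exists del. split; auto. intros h Hh. split.
  - specialize (Hdel h ltac:(lra) ltac:(rewrite Rabs_right; lra) ltac:(lra)).
    apply Rabs_def2 in Hdel as [H1 _].
    assert (f (s + h) - f s < c * h); [|lra].
    replace (f (s + h) - f s) with ((f (s + h) - f s) / h * h) by (field; lra). nra.
  - intros Hsh. specialize (Hdel (- h) ltac:(lra) ltac:(rewrite Rabs_left; lra) ltac:(lra)).
    apply Rabs_def2 in Hdel as [H1 _]. replace (s + - h) with (s - h) in H1 by ring.
    assert (f s - f (s - h) < c * h); [|lra].
    replace (f s - f (s - h)) with ((f (s - h) - f s) / - h * h) by (field; lra). nra.
Qed.

Lemma deriv_within_increment_le t0 f df c : (forall s, t0 <= s -> deriv_within_from t0 f s (df s)) ->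
  (forall s, t0 <= s -> df s <= c) -> forall x y, t0 <= x <= y -> f y - f x <= c * (y - x).
Proof.
  intros Hd Hb x y Hxy. apply (Rle_of_le_plus_eps _ _ (y - x)); [lra|]. intros eps He.
  assert (f y - (c + eps) * y <= f x - (c + eps) * x); [|lra].
  apply (locally_nonincreasing_nonincreasing (fun s => f s - (c + eps) * s) x y); [lra|].
  intros s Hs. destruct (deriv_within_lt_locally_nonincreasing t0 f s (df s) (c + eps)) as [eta [Heta Hg]].
  - lra.
  - apply Hd; lra.
  - specialize (Hb s ltac:(lra)); lra.
  - exists eta; split; auto. intros h Hh. destruct (Hg h Hh) as [H1 H2]. split; auto. intros; apply H2; lra.
Qed.

Lemma deriv_within_opp t0 f s d : deriv_within_from t0 f s d -> deriv_within_from t0 (fun x => - f x) s (- d).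
Proof.
  intros H eps He. destruct (H eps He) as [del [Hd Hdel]]. exists del; split; auto.
  intros h Hh1 Hh2 Hh3. specialize (Hdel h Hh1 Hh2 Hh3).
  replace ((- f (s + h) - - f s) / h - - d) with (- ((f (s + h) - f s) / h - d)) by (field; auto).
  rewrite Rabs_Ropp; auto.
Qed.

Lemma deriv_within_lipschitz t0 f df c : (forall s, t0 <= s -> deriv_within_from t0 f s (df s)) ->
  (forall s, t0 <= s -> Rabs (df s) <= c) ->
  forall x y, t0 <= x -> t0 <= y -> Rabs (f x - f y) <= c * Rabs (x - y).
Proof.
  intros Hd Hb.
  assert (Hle : forall x y, t0 <= x <= y -> Rabs (f y - f x) <= c * (y - x)).
  { intros x y Hxy. apply Rabs_le. split.
    - assert (- f y - - f x <= c * (y - x)); [|lra].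
      apply (deriv_within_increment_le t0 (fun z => - f z) (fun z => - df z) c); auto.
      + intros; apply deriv_within_opp; auto.
      + intros s Hs. specialize (Hb s Hs). pose proof (Rle_abs (- df s)). rewrite Rabs_Ropp in *. lra.
    - apply (deriv_within_increment_le t0 f df c); auto.
      intros s Hs. specialize (Hb s Hs). pose proof (Rle_abs (df s)); lra. }
  intros x y Hx Hy. destruct (Rle_or_lt x y).
  - rewrite Rabs_minus_sym, (Rabs_left1 (x - y)) by lra. replace (- (x - y)) with (y - x) by ring.
    apply Hle; lra.
  - rewrite (Rabs_right (x - y)) by lra. apply Hle; lra.
Qed.

(** * Absolute continuity *)

Lemma AC_lipschitz g a b c : (forall x y, a <= x <= b -> a <= y <= b -> Rabs (g x - g y) <= c * Rabs (x - y)) ->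
  abs_continuous_on a b g.
Proof.
  intros H eps He. set (K := Rabs c + 1). assert (HK : 0 < K) by (unfold K; pose proof (Rabs_pos c); lra).
  exists (eps / K). split; [apply Rdiv_lt_0_compat; auto|]. intros N cs ds Hcd _ Hs.
  apply Rle_lt_trans with (K * rsum N (fun j => ds j - cs j)).
  - rewrite <- rsum_scal. apply rsum_le; intros j Hj. specialize (Hcd j Hj).
    eapply Rle_trans; [apply H; lra|]. rewrite Rabs_right by lra.
    assert (c <= K) by (unfold K; pose proof (Rle_abs c); lra). nra.
  - apply (Rmult_lt_compat_l K) in Hs; auto. replace (K * (eps / K)) with eps in Hs by (field; lra). auto.
Qed.

Lemma AC_sub f h a b : abs_continuous_on a b f -> abs_continuous_on a b h ->
  abs_continuous_on a b (fun t => f t - h t).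
Proof.
  intros Hf Hh eps He. destruct (Hf (eps / 2) ltac:(lra)) as [d1 [Hd1 H1]].
  destruct (Hh (eps / 2) ltac:(lra)) as [d2 [Hd2 H2]].
  exists (Rmin d1 d2). split; [apply Rmin_pos; auto|]. intros N c d Hcd Hord Hs.
  pose proof (Rmin_l d1 d2). pose proof (Rmin_r d1 d2).
  specialize (H1 N c d Hcd Hord ltac:(lra)). specialize (H2 N c d Hcd Hord ltac:(lra)).
  eapply Rle_lt_trans
    with (rsum N (fun j => Rabs (f (d j) - f (c j))) + rsum N (fun j => Rabs (h (d j) - h (c j)))); [|lra].
  rewrite <- rsum_plus. apply rsum_le; intros. cbv beta.
  replace (f (d i) - h (d i) - (f (c i) - h (c i)))
    with ((f (d i) - f (c i)) + - (h (d i) - h (c i))) by ring.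
  eapply Rle_trans; [apply Rabs_triang|]. rewrite Rabs_Ropp. lra.
Qed.

Lemma AC_restrict g a b x y : a <= x -> y <= b -> abs_continuous_on a b g -> abs_continuous_on x y g.
Proof.
  intros Hx Hy H eps He. destruct (H eps He) as [d [Hd Hd2]]. exists d; split; auto.
  intros N c dd Hcd Hord Hs. apply Hd2; auto. intros j Hj; specialize (Hcd j Hj); lra.
Qed.

Lemma finite_common_delta1 (P : nat -> R -> Prop) n :
  (forall i d d', (i < n)%nat -> 0 < d' <= d -> P i d -> P i d') ->
  (forall i, (i < n)%nat -> exists d, 0 < d /\ P i d) ->
  exists d, 0 < d /\ forall i, (i < n)%nat -> P i d.
Proof.
  intros Hmono Hex. induction n as [|n IH].
  - exists 1; split; [lra|intros; lia].
  - destruct IH as [d1 [Hd1 H1]]; [intros; eapply Hmono; eauto; lia|intros; apply Hex; lia|].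
    destruct (Hex n ltac:(lia)) as [d2 [Hd2 H2]].
    pose proof (Rmin_l d1 d2). pose proof (Rmin_r d1 d2). pose proof (Rmin_pos d1 d2 Hd1 Hd2).
    exists (Rmin d1 d2). split; auto. intros i Hi. destruct (Nat.eq_dec i n) as [->|Hne].
    + apply (Hmono n d2); auto.
    + apply (Hmono i d1); [lia|lra|apply H1; lia].
Qed.

Lemma finite_common_delta (P : nat -> nat -> R -> Prop) n m :
  (forall i k d d', (i < n)%nat -> (k < m)%nat -> 0 < d' <= d -> P i k d -> P i k d') ->
  (forall i k, (i < n)%nat -> (k < m)%nat -> exists d, 0 < d /\ P i k d) ->
  exists d, 0 < d /\ forall i k, (i < n)%nat -> (k < m)%nat -> P i k d.
Proof.
  intros Hmono Hex.
  destruct (finite_common_delta1 (fun i d => forall k, (k < m)%nat -> P i k d) n) as [d [Hd H]].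
  - intros i d d' Hi Hd H k Hk. apply (Hmono i k d d'); auto.
  - intros i Hi. apply (finite_common_delta1 (P i) m); intros; [eapply Hmono|apply Hex]; eauto.
  - exists d; auto.
Qed.

Lemma AC_dominated (g : R -> R) (f : nat -> nat -> R -> R) n m a b c : 0 <= c ->
  (forall i k, (i < n)%nat -> (k < m)%nat -> abs_continuous_on a b (f i k)) ->
  (forall x y, a <= x <= b -> a <= y <= b ->
     Rabs (g x - g y) <= c * dsum n m (fun i k => Rabs (f i k x - f i k y))) ->
  abs_continuous_on a b g.
Proof.
  intros Hc Hf Hg eps He.
  assert (Hden : 0 < c * INR n * INR m + 1)
    by (pose proof (pos_INR n); pose proof (pos_INR m); assert (0 <= c * INR n) by nra; nra).
  set (e' := eps / (c * INR n * INR m + 1)).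
  assert (He' : 0 < e') by (unfold e'; apply Rdiv_lt_0_compat; auto).
  destruct (finite_common_delta (fun i k d => forall N cs ds,
      (forall j, (j < N)%nat -> a <= cs j /\ cs j <= ds j <= b) ->
      (forall j j', (j < j')%nat -> (j' < N)%nat -> ds j <= cs j') -> rsum N (fun j => ds j - cs j) < d ->
      rsum N (fun j => Rabs (f i k (ds j) - f i k (cs j))) < e') n m) as [delta [Hd Hdel]].
  - intros i k d d' Hi Hk Hdd H N cs ds H1 H2 H3. apply H; auto. lra.
  - intros i k Hi Hk. apply (Hf i k Hi Hk e' He').
  - exists delta. split; auto. intros N cs ds Hcd Hord Hs.
    apply Rle_lt_trans with (c * dsum n m (fun i k => rsum N (fun j => Rabs (f i k (ds j) - f i k (cs j))))).
    + transitivity (rsum N (fun j => c * dsum n m (fun i k => Rabs (f i k (ds j) - f i k (cs j))))).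
      * apply rsum_le; intros j Hj. specialize (Hcd j Hj). apply Hg; lra.
      * rewrite rsum_scal. right. f_equal. unfold dsum. rewrite <- rsum_swap. apply rsum_ext; intros.
        rewrite <- rsum_swap. reflexivity.
    + apply Rle_lt_trans with (c * dsum n m (fun _ _ => e')).
      * apply Rmult_le_compat_l; auto. apply dsum_le; intros. left. apply Hdel; auto.
      * unfold dsum. rewrite (rsum_ext n _ (fun _ => INR m * e')) by (intros; apply rsum_const).
        rewrite rsum_const. unfold e'.
        replace (c * (INR n * (INR m * (eps / (c * INR n * INR m + 1))))) with
          (eps * ((c * INR n * INR m) / (c * INR n * INR m + 1))) by (field; lra).
        assert ((c * INR n * INR m) / (c * INR n * INR m + 1) < 1)
          by (apply (Rmult_lt_reg_r (c * INR n * INR m + 1)); auto; unfold Rdiv;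
              rewrite Rmult_assoc, Rinv_l by lra; lra).
        nra.
Qed.

Lemma AC_dominated1 (g f : R -> R) a b c : 0 <= c -> abs_continuous_on a b f ->
  (forall x y, a <= x <= b -> a <= y <= b -> Rabs (g x - g y) <= c * Rabs (f x - f y)) ->
  abs_continuous_on a b g.
Proof.
  intros Hc Hf Hg. apply (AC_dominated g (fun _ _ => f) 1 1 a b c); auto.
  intros x y Hx Hy. unfold dsum. simpl rsum. rewrite !Rplus_0_l. auto.
Qed.

Lemma AC_bounded g a b : a <= b -> abs_continuous_on a b g ->
  exists B, forall x, a <= x <= b -> Rabs (g x) <= B.
Proof.
  intros Hab Hac. destruct (Hac 1 ltac:(lra)) as [delta [Hd H]].
  assert (Hstep : forall x y, a <= y <= x -> x <= b -> x - y < delta -> Rabs (g x - g y) < 1).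
  { intros x y Hy Hx Hxy. specialize (H 1%nat (fun _ => y) (fun _ => x)). simpl in H.
    rewrite !Rplus_0_l in H. apply H; intros; lra || lia. }
  assert (Hk : forall (k : nat) x, a <= x <= b -> x <= a + INR k * (delta / 2) ->
                 Rabs (g x - g a) <= INR k).
  { induction k as [|k IH]; intros x Hx Hxk.
    - simpl in *. replace x with a by lra. rewrite Rminus_diag, Rabs_R0. lra.
    - rewrite S_INR in *. destruct (Rle_or_lt x (a + INR k * (delta / 2))) as [Hle|Hlt].
      + specialize (IH x Hx Hle). lra.
      + set (y := a + INR k * (delta / 2)) in *. assert (a <= y) by (unfold y; pose proof (pos_INR k); nra).
        specialize (IH y ltac:(lra) ltac:(unfold y; lra)).
        specialize (Hstep x y ltac:(lra) ltac:(lra) ltac:(unfold y in *; lra)).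
        replace (g x - g a) with ((g x - g y) + (g y - g a)) by ring.
        eapply Rle_trans; [apply Rabs_triang|]. lra. }
  destruct (archimed_cor1 (delta / (2 * (b - a + 1))) ltac:(apply Rdiv_lt_0_compat; lra)) as [K [HK HK0]].
  assert (HKpos : 0 < INR K) by (apply lt_0_INR; auto).
  assert (HK2 : b - a <= INR K * (delta / 2)).
  { apply (Rmult_lt_compat_l (INR K)) in HK; auto. rewrite Rinv_r in HK by lra.
    apply (Rmult_lt_compat_r (2 * (b - a + 1))) in HK; [|lra].
    replace (INR K * (delta / (2 * (b - a + 1))) * (2 * (b - a + 1))) with (INR K * delta) in HK by (field; lra).
    lra. }
  exists (Rabs (g a) + INR K). intros x Hx. specialize (Hk K x Hx ltac:(lra)).
  replace (g x) with ((g x - g a) + g a) by ring. eapply Rle_trans; [apply Rabs_triang|]. lra.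
Qed.

Lemma null_set_add_point (E : R -> Prop) t0 : null_set E -> null_set (fun x => E x \/ x = t0).
Proof.
  intros H eps He. destruct (H (eps / 2) ltac:(lra)) as [c [d [Hcd [Hcov Hs]]]].
  exists (fun j => match j with O => t0 - eps / 8 | S j' => c j' end).
  exists (fun j => match j with O => t0 + eps / 8 | S j' => d j' end).
  split; [|split].
  - intros [|j]; [lra|apply Hcd].
  - intros t [Et| ->]; [destruct (Hcov t Et) as [j Hj]; exists (S j); auto|exists O; lra].
  - intros [|N]; [simpl; lra|]. rewrite rsum_shift. specialize (Hs N). lra.
Qed.

Record tagged_interval := TI { ti_lo : R; ti_hi : R; ti_tag : nat }.

Definition sum_list {A} (f : A -> R) (L : list A) : R := fold_right (fun x acc => f x + acc) 0 L.

Lemma sum_list_le {A} (L : list A) f h : (forall x, In x L -> f x <= h x) -> sum_list f L <= sum_list h L.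
Proof.
  induction L as [|x L IH]; simpl; intros H; [lra|].
  pose proof (H x (or_introl eq_refl)). assert (sum_list f L <= sum_list h L) by (apply IH; auto). lra.
Qed.

Lemma rsum_nth {A} (L : list A) f x0 : rsum (length L) (fun j => f (nth j L x0)) = sum_list f L.
Proof.
  induction L as [|x L IH]; [reflexivity|].
  change (length (x :: L)) with (S (length L)). rewrite rsum_shift. simpl nth. rewrite IH. reflexivity.
Qed.

Lemma sum_list_NoDup_le_rsum (l : list nat) (f : nat -> R) N : NoDup l -> (forall j, In j l -> (j < N)%nat) ->
  (forall j, 0 <= f j) -> sum_list f l <= rsum N f.
Proof.
  intros Hnd Hlt Hf.
  assert (E : sum_list f l = rsum N (fun j => if in_dec Nat.eq_dec j l then f j else 0)).
  { clear Hf. induction l as [|x l IH].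
    - change (sum_list f nil) with 0. rewrite (rsum_ext N _ (fun _ => 0)), rsum_const; [ring|].
      intros j _. destruct (in_dec Nat.eq_dec j nil) as [[]|]; reflexivity.
    - change (sum_list f (x :: l)) with (f x + sum_list f l). inversion Hnd as [|? ? Hx Hnd']; subst.
      rewrite IH by (auto; intros; apply Hlt; simpl; auto).
      rewrite <- (rsum_delta N x f) at 1 by (apply Hlt; simpl; auto). rewrite <- rsum_plus.
      apply rsum_ext; intros j Hj. destruct (Nat.eqb_spec x j) as [<-|Hne].
      + destruct (in_dec Nat.eq_dec x l); [contradiction|].
        destruct (in_dec Nat.eq_dec x (x :: l)) as [_|Hno]; [ring|exfalso; apply Hno; simpl; auto].
      + destruct (in_dec Nat.eq_dec j (x :: l)) as [[Hin|Hin]|Hin], (in_dec Nat.eq_dec j l);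
          try contradiction; try ring. exfalso; apply Hin; simpl; auto. }
  rewrite E. apply rsum_le; intros. destruct (in_dec Nat.eq_dec i l); [lra|apply Hf].
Qed.

Lemma le_fold_max (l : list nat) j : In j l -> (j <= fold_right max 0 l)%nat.
Proof. induction l as [|x l IH]; simpl; [tauto|]. intros [<-|H]; [lia|]. specialize (IH H). lia. Qed.

Definition tags (L : list tagged_interval) := map ti_tag L.

(** A chain from [prev] to [u] is a list of ordered disjoint intervals, each
    inside the cover interval [(cc j, dd j)] of its tag [j]; across the gaps
    between them [g] does not increase. *)
Section CoverChain.
Variables (g : R -> R) (cc dd : nat -> R).

Fixpoint cover_chain (prev : R) (L : list tagged_interval) (u : R) : Prop :=
  match L with
  | nil => prev <= u /\ g u <= g prev
  | iv :: L' => prev <= ti_lo iv <= ti_hi iv /\ g (ti_lo iv) <= g prev /\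
      cc (ti_tag iv) < ti_lo iv /\ ti_hi iv < dd (ti_tag iv) /\ cover_chain (ti_hi iv) L' u
  end.

Lemma cover_chain_le prev L u : cover_chain prev L u -> prev <= u.
Proof.
  revert prev; induction L as [|iv L IH]; simpl; intros prev H; [tauto|].
  destruct H as (H1 & _ & _ & _ & H2). apply IH in H2. lra.
Qed.

Lemma cover_chain_in prev L u : cover_chain prev L u -> forall iv, In iv L ->
  prev <= ti_lo iv <= ti_hi iv /\ ti_hi iv <= u /\ cc (ti_tag iv) < ti_lo iv /\ ti_hi iv < dd (ti_tag iv).
Proof.
  revert prev; induction L as [|iv L IH]; simpl; intros prev H iw Hiw; [tauto|].
  destruct H as (H1 & _ & H3 & H4 & H5). destruct Hiw as [<-|Hiw].
  - apply cover_chain_le in H5. repeat split; lra.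
  - specialize (IH _ H5 iw Hiw). repeat split; lra.
Qed.

Lemma cover_chain_extend prev L v u : cover_chain prev L v -> v <= u -> g u <= g v -> cover_chain prev L u.
Proof.
  revert prev; induction L as [|iv L IH]; simpl; intros prev H Hvu Hg; [lra|].
  destruct H as (H1 & H2 & H3 & H4 & H5). repeat split; auto; lra.
Qed.

Lemma cover_chain_app prev L v L2 u : cover_chain prev L v -> cover_chain v L2 u -> cover_chain prev (L ++ L2) u.
Proof.
  revert prev; induction L as [|iv L IH]; simpl; intros prev H H2.
  - destruct L2 as [|iw L2]; simpl in *; repeat split; try tauto; lra.
  - destruct H as (H3 & H4 & H5 & H6 & H7). repeat split; auto; lra.
Qed.

(** If [u] lies in the cover interval of a tag already used, the chain is cut
    at that interval, which is then stretched up to [u]. *)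
Lemma cover_chain_cut prev L v u j : cover_chain prev L v -> In j (tags L) -> v <= u -> u < dd j ->
  exists L2 rest, cover_chain prev L2 u /\ tags L = tags L2 ++ rest.
Proof.
  revert prev; induction L as [|iv L IH]; simpl; intros prev H Hin Hvu Hu; [tauto|].
  destruct H as (H1 & H2 & H3 & H4 & H5).
  destruct (Nat.eq_dec (ti_tag iv) j) as [<-|Hne].
  - exists (TI (ti_lo iv) u (ti_tag iv) :: nil), (tags L). simpl. split; auto.
    apply cover_chain_le in H5. repeat split; auto; lra.
  - destruct Hin as [E|Hin]; [congruence|].
    destruct (IH _ H5 Hin Hvu Hu) as [L2 [rest [HL2 Hinc]]].
    exists (iv :: L2), rest. simpl. split; [repeat split; auto; lra|rewrite Hinc; auto].
Qed.

Lemma cover_chain_telescope prev L u : cover_chain prev L u ->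
  g u - g prev <= sum_list (fun iv => g (ti_hi iv) - g (ti_lo iv)) L.
Proof.
  revert prev; induction L as [|iv L IH]; simpl; intros prev H; [lra|].
  destruct H as (_ & H2 & _ & _ & H5). specialize (IH _ H5). lra.
Qed.

Lemma cover_chain_sorted prev L u : cover_chain prev L u -> forall x0 j j', (j < j')%nat -> (j' < length L)%nat ->
  ti_hi (nth j L x0) <= ti_lo (nth j' L x0).
Proof.
  revert prev; induction L as [|iv L IH]; simpl; intros prev H x0 j j' Hj Hj'; [lia|].
  destruct H as (_ & _ & _ & _ & H5). destruct j as [|j], j' as [|j']; try lia.
  - apply (cover_chain_in _ L u H5). apply nth_In. lia.
  - apply (IH _ H5); lia.
Qed.

Definition chain_reaches a u := exists L, cover_chain a L u /\ NoDup (tags L).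

Lemma chain_reaches_extend a v u : chain_reaches a v -> v <= u -> g u <= g v -> chain_reaches a u.
Proof. intros [L [HL Hnd]] ? ?. exists L. split; auto. apply (cover_chain_extend a L v); auto. Qed.

Lemma chain_reaches_cover a v u j : chain_reaches a v -> v <= u -> cc j < v -> u < dd j -> chain_reaches a u.
Proof.
  intros [L [HL Hnd]] Hvu Hj1 Hj2.
  destruct (in_dec Nat.eq_dec j (tags L)) as [Hin|Hin].
  - destruct (cover_chain_cut a L v u j HL Hin Hvu Hj2) as [L2 [rest [HL2 Hi]]].
    exists L2. split; auto. rewrite Hi in Hnd. eapply NoDup_app_remove_r; eauto.
  - exists (L ++ TI v u j :: nil). split.
    + apply (cover_chain_app a L v); auto. simpl. repeat split; lra.
    + unfold tags. rewrite map_app. simpl. apply NoDup_app; auto using NoDup_cons, NoDup_nil.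
      intros x Hx [<-|[]]. contradiction.
Qed.

Lemma cover_chain_length_lt a L u delta : cover_chain a L u -> NoDup (tags L) ->
  (forall j, cc j <= dd j) -> (forall N, rsum N (fun j => dd j - cc j) < delta) ->
  sum_list (fun iv => ti_hi iv - ti_lo iv) L < delta.
Proof.
  intros HL Hnd Hcd Hsum. eapply Rle_lt_trans; [|apply (Hsum (S (fold_right max 0%nat (tags L))))].
  apply Rle_trans with (sum_list (fun j => dd j - cc j) (tags L)).
  - clear Hnd. revert a HL. induction L as [|iv L IH]; simpl; intros a HL; [lra|].
    destruct HL as (_ & _ & H3 & H4 & H5). specialize (IH _ H5). lra.
  - apply sum_list_NoDup_le_rsum; auto.
    + intros j Hj. apply le_fold_max in Hj. lia.
    + intros j. specialize (Hcd j). lra.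
Qed.

End CoverChain.

Lemma chain_reaches_all (g : R -> R) (E : R -> Prop) cc dd a b : a <= b ->
  (forall t, E t -> exists j, cc j < t /\ t < dd j) ->
  (forall x, a <= x <= b -> ~ E x -> locally_nonincreasing_at a g x) ->
  chain_reaches g cc dd a b.
Proof.
  intros Hab Hcov Hloc. apply (real_induction a b (chain_reaches g cc dd a)); auto.
  - exists nil. simpl. split; [lra|constructor].
  - intros u Hu Hr. destruct (classic (E u)) as [Eu|nEu].
    + destruct (Hcov u Eu) as [j [Hj1 Hj2]]. exists (dd j - u). split; [lra|]. intros v Hv Hvb.
      apply (chain_reaches_cover g cc dd a u v j); auto; lra.
    + destruct (Hloc u ltac:(lra) nEu) as [eta [Heta Hg]]. exists eta. split; auto. intros v Hv Hvb.
      apply (chain_reaches_extend g cc dd a u v); auto; [lra|].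
      destruct (Hg (v - u) ltac:(lra)) as [Hg1 _]. replace (u + (v - u)) with v in Hg1 by ring. auto.
  - intros u Hu IH. destruct (classic (E u)) as [Eu|nEu].
    + destruct (Hcov u Eu) as [j [Hj1 Hj2]]. set (v := (Rmax a (cc j) + u) / 2).
      assert (Hv : a <= v < u /\ cc j < v)
        by (pose proof (Rmax_l a (cc j)); pose proof (Rmax_r a (cc j));
            pose proof (Rmax_lub_lt a (cc j) u ltac:(lra) Hj1); unfold v; lra).
      apply (chain_reaches_cover g cc dd a v u j); [apply IH|..]; lra.
    + destruct (Hloc u ltac:(lra) nEu) as [eta [Heta Hg]].
      set (h := Rmin (eta / 2) (u - a)).
      assert (Hh : 0 < h < eta /\ h <= u - a)
        by (unfold h; split; [split; [apply Rmin_pos|eapply Rle_lt_trans; [apply Rmin_l|]]|apply Rmin_r]; lra).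
      apply (chain_reaches_extend g cc dd a (u - h) u); [apply IH; lra|lra|apply (Hg h); lra].
Qed.

(** A Lebesgue-free form of "an absolutely continuous function with a.e.
    nonpositive derivative is nonincreasing": cover the exceptional set by
    intervals of small total length and chain them with the good points. *)
Lemma AC_locally_nonincreasing_ae (g : R -> R) a b (E : R -> Prop) : a <= b ->
  abs_continuous_on a b g -> null_set E ->
  (forall x, a <= x <= b -> ~ E x -> locally_nonincreasing_at a g x) -> g b <= g a.
Proof.
  intros Hab HAC Hnull Hloc. apply (Rle_of_le_plus_eps _ _ 1); [lra|]. intros eps He.
  destruct (HAC eps He) as [delta [Hd HACd]].
  destruct (Hnull delta Hd) as [cc [dd [Hcd [Hcov Hsum]]]].
  destruct (chain_reaches_all g E cc dd a b Hab Hcov Hloc) as [L [HL Hnd]].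
  pose proof (cover_chain_telescope g cc dd a L b HL) as Htele.
  set (x0 := TI 0 0 0).
  set (c := fun j => ti_lo (nth j L x0)). set (d := fun j => ti_hi (nth j L x0)).
  assert (HAC2 : rsum (length L) (fun j => Rabs (g (d j) - g (c j))) < eps).
  { apply HACd.
    - intros j Hj. pose proof (cover_chain_in g cc dd a L b HL (nth j L x0) (nth_In _ _ Hj)).
      unfold c, d; lra.
    - intros j j' Hj Hj'. apply (cover_chain_sorted g cc dd a L b HL); auto.
    - unfold c, d. rewrite (rsum_nth L (fun iv => ti_hi iv - ti_lo iv)).
      apply (cover_chain_length_lt g cc dd a L b); auto. }
  unfold c, d in HAC2. rewrite (rsum_nth L (fun iv => Rabs (g (ti_hi iv) - g (ti_lo iv)))) in HAC2.
  pose proof (sum_list_le L (fun iv => g (ti_hi iv) - g (ti_lo iv))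
                (fun iv => Rabs (g (ti_hi iv) - g (ti_lo iv))) (fun iv _ => Rle_abs _)).
  lra.
Qed.

Lemma AC_increment_le (g : R -> R) a b (E : R -> Prop) c : a <= b ->
  abs_continuous_on a b g -> null_set E ->
  (forall x, a < x <= b -> ~ E x -> exists d, derivable_pt_lim g x d /\ d <= c) ->
  g b - g a <= c * (b - a).
Proof.
  intros Hab HAC Hnull Hder. apply (Rle_of_le_plus_eps _ _ (b - a)); [lra|]. intros eps He.
  assert (g b - (c + eps) * b <= g a - (c + eps) * a); [|lra].
  apply (AC_locally_nonincreasing_ae (fun x => g x - (c + eps) * x) a b (fun x => E x \/ x = a)); auto.
  - apply AC_sub; auto. apply (AC_lipschitz _ _ _ (Rabs (c + eps))). intros x y _ _.
    rewrite <- Rmult_minus_distr_l, Rabs_mult. lra.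
  - apply null_set_add_point; auto.
  - intros x Hx HE. assert (Hx' : a < x) by (destruct (Req_dec x a); [exfalso; apply HE; auto|lra]).
    destruct (Hder x ltac:(lra) (fun h => HE (or_introl h))) as [d [Hd Hdc]].
    apply (derivable_neg_locally_nonincreasing _ _ _ (d - (c + eps) * 1)); [|lra].
    apply derivable_pt_lim_minus; auto.
    apply (derivable_pt_lim_ext (fun z => (c + eps) * id z)); [reflexivity|].
    apply derivable_pt_lim_scal, derivable_pt_lim_id.
Qed.

(** * Derivatives *)

Lemma deriv_within_interior t0 f t d : t0 < t -> deriv_within_from t0 f t d -> derivable_pt_lim f t d.
Proof.
  intros Ht H eps He. destruct (H eps He) as [del [Hd Hdel]].
  pose proof (Rmin_l del (t - t0)). pose proof (Rmin_r del (t - t0)).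
  exists (mkposreal _ (Rmin_pos del (t - t0) Hd ltac:(lra))). simpl. intros h Hh Hh2.
  apply Rabs_def2 in Hh2 as Hh3. apply Hdel; auto; lra.
Qed.

Lemma derivable_pt_lim_rsum n (f : nat -> R -> R) df t :
  (forall i, (i < n)%nat -> derivable_pt_lim (f i) t (df i)) ->
  derivable_pt_lim (fun s => rsum n (fun i => f i s)) t (rsum n df).
Proof.
  induction n as [|n IH]; intros H; simpl; [apply (derivable_pt_lim_const 0)|].
  apply (derivable_pt_lim_plus (fun s => rsum n (fun i => f i s))); [apply IH; intros|]; apply H; lia.
Qed.

Lemma derivable_pt_lim_dsum n m (f : nat -> nat -> R -> R) df t :
  (forall i k, (i < n)%nat -> (k < m)%nat -> derivable_pt_lim (f i k) t (df i k)) ->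
  derivable_pt_lim (fun s => dsum n m (fun i k => f i k s)) t (dsum n m df).
Proof.
  intros H. apply (derivable_pt_lim_rsum n (fun i s => rsum m (fun k => f i k s))).
  intros i Hi. apply (derivable_pt_lim_rsum m (f i)). auto.
Qed.

Lemma kquad_derivable n m K (F : nat -> nat -> R -> R) dF t :
  (forall i k j l, (i < n)%nat -> (k < m)%nat -> (j < n)%nat -> (l < m)%nat -> K i k j l = K j l i k) ->
  (forall j l, (j < n)%nat -> (l < m)%nat -> derivable_pt_lim (F j l) t (dF j l)) ->
  derivable_pt_lim (fun s => kquad n m K (fun j l => F j l s)) t
    (2 * dot n m dF (kapply n m K (fun j l => F j l t))).
Proof.
  intros Ksym H.
  replace (2 * dot n m dF (kapply n m K (fun j l => F j l t))) with
    (dsum n m (fun i k => dF i k * kapply n m K (fun j l => F j l t) i k + F i k t * kapply n m K dF i k)).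
  - apply (derivable_pt_lim_dsum n m (fun i k s => F i k s * kapply n m K (fun j l => F j l s) i k)).
    intros i k Hi Hk. apply (derivable_pt_lim_mult (F i k)); auto.
    apply (derivable_pt_lim_dsum n m (fun j l s => K i k j l * F j l s)). intros.
    apply derivable_pt_lim_scal; auto.
  - rewrite dsum_plus. fold (dot n m dF (kapply n m K (fun j l => F j l t))).
    fold (dot n m (fun j l => F j l t) (kapply n m K dF)). rewrite (kapply_sym n m K Ksym). ring.
Qed.

Lemma sqrt_lipschitz_above a b r : 0 < r -> r <= a -> r <= b ->
  Rabs (sqrt a - sqrt b) <= / (2 * sqrt r) * Rabs (a - b).
Proof.
  intros Hr Ha Hb.
  assert (Hsa : sqrt r <= sqrt a) by (apply sqrt_le_1_alt; lra).
  assert (Hsb : sqrt r <= sqrt b) by (apply sqrt_le_1_alt; lra).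
  assert (Hs0 : 0 < sqrt r) by (apply sqrt_lt_R0; lra).
  assert (E : a - b = (sqrt a - sqrt b) * (sqrt a + sqrt b)).
  { replace ((sqrt a - sqrt b) * (sqrt a + sqrt b)) with (sqrt a * sqrt a - sqrt b * sqrt b) by ring.
    rewrite !sqrt_sqrt; lra. }
  rewrite E, Rabs_mult, (Rabs_right (sqrt a + sqrt b)) by lra.
  pose proof (Rabs_pos (sqrt a - sqrt b)).
  apply (Rmult_le_reg_r (2 * sqrt r)); [lra|].
  replace (/ (2 * sqrt r) * (Rabs (sqrt a - sqrt b) * (sqrt a + sqrt b)) * (2 * sqrt r)) with
    (Rabs (sqrt a - sqrt b) * (sqrt a + sqrt b)) by (field; lra).
  nra.
Qed.

Lemma finite_choice2 {A : Type} (x0 : A) n m (P : nat -> nat -> A -> Prop) :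
  (forall i k, (i < n)%nat -> (k < m)%nat -> exists x, P i k x) ->
  exists f : nat -> nat -> A, forall i k, (i < n)%nat -> (k < m)%nat -> P i k (f i k).
Proof.
  intros H.
  assert (H' : forall i k, exists x, (i < n)%nat -> (k < m)%nat -> P i k x).
  { intros i k. destruct (Compare_dec.lt_dec i n) as [Hi|Hi]; [destruct (Compare_dec.lt_dec k m) as [Hk|Hk]|].
    - destruct (H i k Hi Hk) as [x Hx]. exists x; auto.
    - exists x0; intros; lia.
    - exists x0; intros; lia. }
  exists (fun i k => proj1_sig (constructive_indefinite_description _ (H' i k))).
  intros i k Hi Hk. destruct (constructive_indefinite_description _ (H' i k)); simpl; auto.
Qed.

Lemma in_SGN_mul z u : in_SGN z u -> u * z = Rabs z.
Proof.
  intros (H1 & H2 & H3). destruct (Rtotal_order z 0) as [Hz|[Hz|Hz]].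
  - rewrite (H2 Hz), Rabs_left; lra.
  - subst; rewrite Rabs_R0; ring.
  - rewrite (H1 Hz), Rabs_right; lra.
Qed.

(** One row of the estimator: with [u_k] in [SGN(z_k)] and [|da| <= S],
    [(-beta u - da) . z <= -beta |z|_1 + S |z|_2 <= -(beta - S) |z|_2]. *)
Lemma sgn_row_decay m (z u da : nat -> R) beta S : 0 <= beta ->
  (forall k, (k < m)%nat -> in_SGN (z k) (u k)) -> norm2 m da <= S ->
  rsum m (fun k => (- beta * u k - da k) * z k) <= - (beta - S) * norm2 m z.
Proof.
  intros Hbeta Hsgn Hda.
  rewrite (rsum_ext m _ (fun k => - beta * Rabs (z k) + z k * - da k))
    by (intros k Hk; rewrite <- (in_SGN_mul _ _ (Hsgn k Hk)); ring).
  rewrite rsum_plus, rsum_scal.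
  pose proof (cauchy_schwarz 1 m (fun _ k => z k) (fun _ k => - da k)) as Hcs.
  unfold sqnorm, dot, dsum in Hcs. simpl rsum in Hcs. rewrite !Rplus_0_l in Hcs.
  rewrite (rsum_ext m (fun k => - da k * - da k) (fun k => da k * da k)) in Hcs by (intros; ring).
  fold (norm2 m z) (norm2 m da) in Hcs.
  pose proof (sqrt_sum_sqr_le_sum_abs m z). fold (norm2 m z) in H.
  pose proof (sqrt_pos (rsum m (fun k => z k * z k))). fold (norm2 m z) in H0.
  assert (norm2 m z * norm2 m da <= norm2 m z * S) by (apply Rmult_le_compat_l; auto).
  nra.
Qed.

Lemma sqrt_sqnorm_le_sum_row_norms n m W : sqrt (sqnorm n m W) <= rsum n (fun i => norm2 m (W i)).
Proof.
  pose proof (sqrt_sum_sqr_le_sum_abs n (fun i => norm2 m (W i))) as H. cbv beta in H.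
  rewrite (rsum_ext n (fun i => Rabs (norm2 m (W i))) (fun i => norm2 m (W i))) in H
    by (intros; apply Rabs_right, Rle_ge, sqrt_pos).
  rewrite (rsum_ext n (fun i => norm2 m (W i) * norm2 m (W i))
                     (fun i => rsum m (fun k => W i k * W i k))) in H
    by (intros; apply sqrt_sqrt, rsum_nonneg; intros; apply Rle_0_sqr).
  exact H.
Qed.

(** * The Lyapunov function *)

Section Lyapunov.
Variables (n m : nat) (w : nat -> nat -> R) (p : nat -> R)
  (t0 beta : R) (a0 da0 : nat -> R -> R) (a : nat -> nat -> R -> R)
  (lmin lmax S : R) (Nul : R -> Prop).
Hypothesis Hgraph : graph_ok n w p.
Hypothesis HA1 : assumption_A1 n w p.
Hypothesis Ha0 : C1_from t0 m a0 da0.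
Hypothesis Hsup : is_lub (fun x => exists t, t0 <= t /\ x = norm2 m (fun k => da0 k t)) S.
Hypothesis HA2 : S < beta.
Hypothesis Hlmin : is_lambda_min n m w p lmin.
Hypothesis Hlmax : is_lambda_max n m w p lmax.
Hypothesis Hac : forall i k T, (i < n)%nat -> (k < m)%nat -> t0 <= T -> abs_continuous_on t0 T (a i k).
Hypothesis HNul : null_set Nul.
Hypothesis Hfil : forall t, t0 < t -> ~ Nul t -> forall i k, (i < n)%nat -> (k < m)%nat ->
  exists dd u, derivable_pt_lim (a i k) t dd /\ in_SGN (sliding_var n w p a a0 i k t) u /\
    dd = - beta * u.

Definition abar t i k := a i k t - a0 k t.
Definition V t := / 2 * Mquad n m w p (abar t).

Lemma S_nonneg : 0 <= S.
Proof. eapply Rle_trans; [|apply (proj1 Hsup); exists t0; split; [lra|reflexivity]]. apply sqrt_pos. Qed.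

Lemma lmin_pos : 0 < lmin.
Proof. apply (is_eigenvalue_pos n m w p Hgraph), Hlmin; auto. Qed.

Lemma lmin_le_lmax : lmin <= lmax.
Proof. apply Hlmax, Hlmin. Qed.

Lemma da0_norm_le s : t0 <= s -> norm2 m (fun k => da0 k s) <= S.
Proof. intros Hs. apply (proj1 Hsup). exists s; auto. Qed.

Lemma a0_lipschitz k : (k < m)%nat ->
  forall x y, t0 <= x -> t0 <= y -> Rabs (a0 k x - a0 k y) <= S * Rabs (x - y).
Proof.
  intros Hk. apply (deriv_within_lipschitz t0 (a0 k) (da0 k) S); [intros; apply (Ha0 k Hk); auto|].
  intros s Hs. eapply Rle_trans; [|apply (da0_norm_le s Hs)]. unfold norm2. rewrite <- sqrt_Rsqr_abs.
  apply sqrt_le_1_alt. apply (rsum_term_le m (fun k => da0 k s * da0 k s) k); auto. intros; apply Rle_0_sqr.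
Qed.

Lemma abar_AC i k T : (i < n)%nat -> (k < m)%nat -> t0 <= T -> abs_continuous_on t0 T (fun t => abar t i k).
Proof.
  intros Hi Hk HT. apply AC_sub; auto. apply (AC_lipschitz _ _ _ S). intros; apply a0_lipschitz; auto; lra.
Qed.

Lemma V_nonneg t : 0 <= V t.
Proof. unfold V. pose proof (Mquad_nonneg n m w p Hgraph (abar t)). lra. Qed.

(** [V] is locally Lipschitz in the bounded AC functions [abar i k]. *)
Lemma V_AC T : t0 <= T -> abs_continuous_on t0 T V.
Proof.
  intros HT.
  destruct (finite_common_delta (fun i k d => forall x, t0 <= x <= T -> Rabs (abar x i k) <= / d) n m)
    as [d [Hd Hb]].
  - intros i k d d' Hi Hk Hdd H x Hx. eapply Rle_trans; [apply H; auto|]. apply Rinv_le_contravar; lra.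
  - intros i k Hi Hk. destruct (AC_bounded _ t0 T HT (abar_AC i k T Hi Hk HT)) as [B HB].
    exists (/ (Rabs B + 1)). split; [apply Rinv_0_lt_compat; pose proof (Rabs_pos B); lra|].
    intros x Hx. rewrite Rinv_inv. specialize (HB x Hx). pose proof (Rle_abs B). lra.
  - assert (Hd' : 0 < / d) by (apply Rinv_0_lt_compat; auto).
    pose proof (kabs_total_nonneg n m (Mmat n m w p)).
    apply (AC_dominated V (fun i k t => abar t i k) n m t0 T (/ 2 * (2 * / d * kabs_total n m (Mmat n m w p)))).
    + apply Rmult_le_pos; [lra|]. apply Rmult_le_pos; lra.
    + intros; apply abar_AC; auto.
    + intros x y Hx Hy. unfold V. rewrite <- Rmult_minus_distr_l.
      change (Mquad n m w p ?u) with (kquad n m (Mmat n m w p) u).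
      rewrite (kquad_sub n m _ (Mmat_sym n m w p Hgraph)), Rabs_mult, Rabs_right, Rmult_assoc by lra.
      apply Rmult_le_compat_l; [lra|]. apply dot_abs_le. intros i k Hi Hk.
      apply kapply_abs_le; auto; [lra|]. intros j l Hj Hl. eapply Rle_trans; [apply Rabs_triang|].
      pose proof (Hb j l Hj Hl x Hx). pose proof (Hb j l Hj Hl y Hy). lra.
Qed.

Lemma V_derivable_decay t : t0 < t -> ~ Nul t -> exists Vd, derivable_pt_lim V t Vd /\
  Vd <= - (beta - S) * sqrt (sqnorm n m (Mvec n m w p (abar t))).
Proof.
  intros Ht HN.
  destruct (finite_choice2 (0, 0) n m (fun i k q => derivable_pt_lim (a i k) t (fst q) /\
              in_SGN (sliding_var n w p a a0 i k t) (snd q) /\ fst q = - beta * snd q)) as [q Hq].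
  { intros i k Hi Hk. destruct (Hfil t Ht HN i k Hi Hk) as [dd [u H]]. exists (dd, u). exact H. }
  set (W := Mvec n m w p (abar t)).
  exists (dot n m (fun i k => fst (q i k) - da0 k t) W). split.
  - replace (dot n m (fun i k => fst (q i k) - da0 k t) W) with
      (/ 2 * (2 * dot n m (fun i k => fst (q i k) - da0 k t) (kapply n m (Mmat n m w p) (abar t))))
      by (change (kapply n m (Mmat n m w p) (abar t)) with W; field).
    apply derivable_pt_lim_scal.
    apply (kquad_derivable n m (Mmat n m w p) (fun i k s => abar s i k)); [apply Mmat_sym; auto|].
    intros i k Hi Hk. apply derivable_pt_lim_minus; [apply Hq; auto|].
    apply (deriv_within_interior t0); auto. apply (Ha0 k Hk); lra.
  - apply Rle_trans with (rsum n (fun i => - (beta - S) * norm2 m (W i))).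
    + apply rsum_le; intros i Hi.
      rewrite (rsum_ext m _ (fun k => (- beta * snd (q i k) - da0 k t) * W i k))
        by (intros k Hk; destruct (Hq i k Hi Hk) as (_ & _ & ->); reflexivity).
      apply sgn_row_decay; [pose proof S_nonneg; lra| |apply da0_norm_le; lra].
      intros k Hk. unfold W, abar. rewrite Mvec_sliding_var by auto. apply Hq; auto.
    + rewrite rsum_scal. pose proof (sqrt_sqnorm_le_sum_row_norms n m W). nra.
Qed.

Lemma V_nonincreasing x y : t0 <= x <= y -> V y <= V x.
Proof.
  intros Hxy. assert (V y - V x <= 0 * (y - x)); [|lra].
  apply (AC_increment_le V x y Nul 0); auto; [lra|apply (AC_restrict V t0 y); [lra|lra|apply V_AC; lra]|].
  intros s Hs HN. destruct (V_derivable_decay s ltac:(lra) HN) as [Vd [Hd Hb]]. exists Vd. split; auto.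
  pose proof (sqrt_pos (sqnorm n m (Mvec n m w p (abar s)))). nra.
Qed.

Lemma V_le_lambda_max t : 2 * V t <= lmax * sqnorm n m (abar t).
Proof. unfold V. pose proof (Mquad_le_lambda_max n m w p Hgraph lmax Hlmax (abar t)). lra. Qed.

(** [lmin |x|^2 <= x^T M x <= |x| |M x|]. *)
Lemma lambda_min_le_Mvec_norm t :
  lmin * sqrt (sqnorm n m (abar t)) <= sqrt (sqnorm n m (Mvec n m w p (abar t))).
Proof.
  set (x := abar t). set (y := Mvec n m w p x).
  pose proof (lambda_min_le_Mquad n m w p Hgraph lmin Hlmin x) as H1.
  pose proof (cauchy_schwarz n m x y) as H2. change (Mquad n m w p x) with (dot n m x y) in H1.
  pose proof (sqnorm_nonneg n m x). pose proof lmin_pos. pose proof (sqrt_pos (sqnorm n m y)).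
  assert (Hq : sqrt (sqnorm n m x) * sqrt (sqnorm n m x) = sqnorm n m x) by (apply sqrt_sqrt; auto).
  destruct (sqrt_pos (sqnorm n m x)) as [Hpos|E]; [|rewrite <- E; lra].
  apply (Rmult_le_reg_l (sqrt (sqnorm n m x))); auto. nra.
Qed.

Definition decay_rate := (beta - S) * lmin / sqrt (2 * lmax).

(** With [|abar| >= sqrt (2 V / lmax)], [(sqrt V)' = V' / (2 sqrt V)] is at
    most [-(beta - S) lmin |abar| / (2 sqrt V) <= - decay_rate]. *)
Lemma sqrt_V_derivable_decay s : t0 < s -> ~ Nul s -> 0 < V s ->
  exists d, derivable_pt_lim (fun z => sqrt (V z)) s d /\ d <= - decay_rate.
Proof.
  intros Hs HN HVs. pose proof lmin_pos. pose proof lmin_le_lmax. pose proof S_nonneg.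
  destruct (V_derivable_decay s Hs HN) as [Vd [Hd Hb]].
  set (A := sqrt (V s)). assert (HA : 0 < A) by (apply sqrt_lt_R0; auto).
  set (q := sqrt (sqnorm n m (abar s))). assert (Hq0 : 0 <= q) by apply sqrt_pos.
  assert (HB : 0 < sqrt (2 * lmax)) by (apply sqrt_lt_R0; lra).
  assert (Hvd : Vd <= - ((beta - S) * lmin) * q)
    by (pose proof (lambda_min_le_Mvec_norm s) as Hl; fold q in Hl; nra).
  assert (HqB : 2 * A <= q * sqrt (2 * lmax)).
  { apply Rsqr_incr_0_var; [|apply Rmult_le_pos; lra]. unfold Rsqr.
    replace (2 * A * (2 * A)) with (4 * (A * A)) by ring.
    replace (q * sqrt (2 * lmax) * (q * sqrt (2 * lmax)))
      with ((q * q) * (sqrt (2 * lmax) * sqrt (2 * lmax))) by ring.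
    unfold A, q. rewrite !sqrt_sqrt; try lra; [|apply sqnorm_nonneg]. pose proof (V_le_lambda_max s). lra. }
  exists (/ (2 * A) * Vd). split.
  - apply (derivable_pt_lim_comp V sqrt); auto. apply derivable_pt_lim_sqrt; auto.
  - unfold decay_rate. apply (Rmult_le_reg_r (2 * A * sqrt (2 * lmax))); [nra|].
    replace (/ (2 * A) * Vd * (2 * A * sqrt (2 * lmax))) with (Vd * sqrt (2 * lmax)) by (field; lra).
    replace (- ((beta - S) * lmin / sqrt (2 * lmax)) * (2 * A * sqrt (2 * lmax))) with
      (- ((beta - S) * lmin) * (2 * A)) by (field; lra).
    assert (0 < (beta - S) * lmin) by (apply Rmult_lt_0_compat; lra). nra.
Qed.

Lemma sqrt_V_decay t : t0 <= t -> 0 < V t -> sqrt (V t) - sqrt (V t0) <= - decay_rate * (t - t0).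
Proof.
  intros Ht HVt. assert (HV : forall s, t0 <= s <= t -> V t <= V s) by (intros; apply V_nonincreasing; lra).
  apply (AC_increment_le (fun z => sqrt (V z)) t0 t Nul); auto.
  - apply (AC_dominated1 _ V t0 t (/ (2 * sqrt (V t)))).
    + left; apply Rinv_0_lt_compat. pose proof (sqrt_lt_R0 _ HVt); lra.
    + apply V_AC; lra.
    + intros x y Hx Hy. apply sqrt_lipschitz_above; auto; apply HV; lra.
  - intros s Hs HN. apply sqrt_V_derivable_decay; auto; [lra|]. pose proof (HV s ltac:(lra)). lra.
Qed.

Lemma V_vanishes t : t0 + sqrt (2 * lmax * V t0) / (lmin * (beta - S)) <= t -> V t = 0.
Proof.
  intros Ht. pose proof lmin_pos. pose proof lmin_le_lmax. pose proof S_nonneg. pose proof (V_nonneg t0).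
  assert (Hden : 0 < lmin * (beta - S)) by (apply Rmult_lt_0_compat; lra).
  assert (Hs : 0 <= sqrt (2 * lmax * V t0) / (lmin * (beta - S)))
    by (apply Rmult_le_pos; [apply sqrt_pos|left; apply Rinv_0_lt_compat; auto]).
  destruct (V_nonneg t) as [Hp|Hz]; auto. exfalso.
  pose proof (sqrt_V_decay t ltac:(lra) Hp) as Hd.
  assert (HB : 0 < sqrt (2 * lmax)) by (apply sqrt_lt_R0; lra).
  assert (Hrate : 0 <= decay_rate)
    by (unfold decay_rate; apply Rmult_le_pos; [apply Rmult_le_pos; lra|left; apply Rinv_0_lt_compat; auto]).
  assert (decay_rate * (t - t0) >= sqrt (V t0)).
  { apply Rle_ge, Rle_trans with (decay_rate * (sqrt (2 * lmax * V t0) / (lmin * (beta - S)))).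
    - rewrite sqrt_mult by lra. unfold decay_rate. right. field. lra.
    - apply Rmult_le_compat_l; lra. }
  pose proof (sqrt_lt_R0 _ Hp). lra.
Qed.

End Lyapunov.

Theorem mainTheorem3
  (n m : nat) (w : nat -> nat -> R) (p : nat -> R)
  (t0 beta : R) (a0 da0 : nat -> R -> R) (a : nat -> nat -> R -> R)
  (lmin lmax sup_da0 : R)
  (Hgraph : graph_ok n w p)
  (HA1 : assumption_A1 n w p)
  (Ha0 : C1_from t0 m a0 da0)
  (Hbeta : 0 < beta)
  (Hsup : is_lub (fun x => exists t, t0 <= t /\ x = norm2 m (fun k => da0 k t)) sup_da0)
  (HA2 : sup_da0 < beta)
  (Hlmin : is_lambda_min n m w p lmin)
  (Hlmax : is_lambda_max n m w p lmax)
  (Hsol : filippov_solution n m w p beta t0 a0 a) :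
  let V0 := / 2 * Mquad n m w p (fun i k => a i k t0 - a0 k t0) in
  let Tf := t0 + sqrt (2 * lmax * V0) / (lmin * (beta - sup_da0)) in
  forall t, Tf <= t ->
    forall i k, (i < n)%nat -> (k < m)%nat -> a i k t = a0 k t.
Proof.
  intros V0 Tf t Ht i k Hi Hk. destruct Hsol as [Hac [Nul [HNul Hfil]]].
  assert (HV : V n m w p a0 a t = 0)
    by (apply (V_vanishes n m w p t0 beta a0 da0 a lmin lmax sup_da0 Nul); auto).
  assert (HQ : Mquad n m w p (abar a0 a t) = 0) by (unfold V in HV; lra).
  pose proof (Mquad_eq0 n m w p Hgraph _ HA1 HQ i k Hi Hk). unfold abar in *. lra.
Qed.
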